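(* Let $n$ be an ambient name and $T_1$ a pure mobile-ambient process. Define the binary predicate $\mathcal{P}^{-|open\ n.T_1}(X,Y)$ on pure processes to hold iff there exist a process $P''$ and a name $m\notin fn(X)$ such that $P''\downarrow_m$, $C'[X]\rightsquigarrow P''\rightsquigarrow Y$ and not $Y\downarrow_m$, where $C'[-]=-\mid open\ n.(m[\mathbf{0}]\mid open\ m.T_1)$. Then $\mathcal{P}^{-|open\ n.T_1}$ is stable under $\sim^{BS}_M$, and for all pure processes $P,P'$: $\mathcal{P}^{-|open\ n.T_1}(P,P')$ holds if and only if $P\xrightarrow{-|open\ n.T_1}_{M_I}P'$.
   Context: Mobile ambients (finite, communication-free fragment). Pure processes $P::=\mathbf{0}\mid n[P]\mid M.P\mid(\nu n)P\mid P_1|P_2$, $M::=in\ n\mid out\ n\mid open\ n$; extended processes also allow process variables $X$ and ambients $x[P]$ with name variables $x$ (each variable at most once). Structural congruence $\equiv$: least congruence with $|$ commutative, associative, unit $\mathbf{0}$; $(\nu n)(\nu m)P\equiv(\nu m)(\nu n)P$; $(\nu n)(P|Q)\equiv P|(\nu n)Q$ if $n\notin fn(P)$; $(\nu n)m[P]\equiv m[(\nu n)P]$ if $n\ne m$; $(\nu n)M.P\equiv M.(\nu n)P$ if $n\notin fn(M)$; $\alpha$-conversion. Reduction $\rightsquigarrow$: least relation closed under $\equiv$, $(\nu n)-$, $n[-]$, $-|R$, generated by $n[in\ m.P|Q]|m[R]\rightsquigarrow m[n[P|Q]|R]$, $m[n[out\ m.P|Q]|R]\rightsquigarrow n[P|Q]|m[R]$,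 $open\ n.P|n[Q]\rightsquigarrow P|Q$. Barb $P\downarrow_n$ iff $P\equiv(\nu A)(n[Q]|R)$ with $n\notin A$. Barbed saturated bisimilarity $\sim^{BS}_M$ is the largest symmetric relation $\mathcal{R}$ on pure processes such that if $P\,\mathcal{R}\,Q$ then for every (pure, unary) context $C[-]$ and name $n$: $C[P]\downarrow_n$ implies $C[Q]\downarrow_n$, and $C[P]\rightsquigarrow P'$ implies $C[Q]\rightsquigarrow Q'$ for some $Q'$ with $P'\,\mathcal{R}\,Q'$. A predicate $\mathcal{P}(X,Y)$ is stable under $\mathcal{R}$ if whenever $P\,\mathcal{R}\,Q$ and $\mathcal{P}(P,P')$ there is $Q'$ with $\mathcal{P}(Q,Q')$ and $P'\,\mathcal{R}\,Q'$. The only rule of the transition system $M$ producing labels of shape $-|open\ n.X_1$ is (CoOpen): if $P\equiv(\nu A)(n[P_1]|P_2)$ with $n\notin A$ then $P\xrightarrow{-|open\ n.X_1}(\nu A)(P_1|X_1|P_2)$. $M_I$ instantiates variables: $P\xrightarrow{C[-]}_{M_I}Q$ iff $P\xrightarrow{C_\epsilon[-]}Q_\epsilon$ in $M$ and for some capture-avoiding substitution $\sigma$ of pure processes/names for variables, $Q_\epsilon\sigma\equiv Q$ and $C_\epsilon[-]\sigma=C[-]$. Thus $P\xrightarrow{-|open\ n.T_1}_{M_I}P'$ iff $P\equiv(\nu A)(n[P_1]|P_2)$, $n\notin A$, and $P'\equiv(\nu A)(P_1|T_1|P_2)$ (after $\alpha$-converting $A$ away from $fn(T_1)$). *)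

From Stdlib Require Import List Arith.
Import ListNotations.

Definition name := nat.

Inductive cap : Type :=
| In_ (n : name) | Out_ (n : name) | Open_ (n : name).

Inductive proc : Type :=
| Zero : proc
| Amb : name -> proc -> proc
| Act : cap -> proc -> proc
| Nu : name -> proc -> proc
| Par : proc -> proc -> proc.

Definition fn_cap (M : cap) : list name :=
  match M with In_ n | Out_ n | Open_ n => [n] end.

Fixpoint fn (P : proc) : list name :=
  match P with
  | Zero => []
  | Amb n Q => n :: fn Q
  | Act M Q => fn_cap M ++ fn Q
  | Nu n Q => remove Nat.eq_dec n (fn Q)
  | Par Q R => fn Q ++ fn R
  end.

Definition swapn (a b x : name) : name :=
  if Nat.eqb x a then b else if Nat.eqb x b then a else x.

Definition swap_cap (a b : name) (M : cap) : cap :=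
  match M with
  | In_ n => In_ (swapn a b n)
  | Out_ n => Out_ (swapn a b n)
  | Open_ n => Open_ (swapn a b n)
  end.

Fixpoint swap (a b : name) (P : proc) : proc :=
  match P with
  | Zero => Zero
  | Amb n Q => Amb (swapn a b n) (swap a b Q)
  | Act M Q => Act (swap_cap a b M) (swap a b Q)
  | Nu n Q => Nu (swapn a b n) (swap a b Q)
  | Par Q R => Par (swap a b Q) (swap a b R)
  end.

Inductive scong : proc -> proc -> Prop :=
| sc_refl P : scong P P
| sc_sym P Q : scong P Q -> scong Q P
| sc_trans P Q R : scong P Q -> scong Q R -> scong P R
| sc_amb n P Q : scong P Q -> scong (Amb n P) (Amb n Q)
| sc_act M P Q : scong P Q -> scong (Act M P) (Act M Q)
| sc_nu n P Q : scong P Q -> scong (Nu n P) (Nu n Q)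
| sc_par P P' Q Q' : scong P P' -> scong Q Q' -> scong (Par P Q) (Par P' Q')
| sc_par_comm P Q : scong (Par P Q) (Par Q P)
| sc_par_assoc P Q R : scong (Par (Par P Q) R) (Par P (Par Q R))
| sc_par_zero P : scong (Par P Zero) P
| sc_nu_nu n m P : scong (Nu n (Nu m P)) (Nu m (Nu n P))
| sc_nu_par n P Q : ~ In n (fn P) -> scong (Nu n (Par P Q)) (Par P (Nu n Q))
| sc_nu_amb n m P : n <> m -> scong (Nu n (Amb m P)) (Amb m (Nu n P))
| sc_nu_act n M P : ~ In n (fn_cap M) -> scong (Nu n (Act M P)) (Act M (Nu n P))
| sc_alpha n m P : ~ In m (fn (Nu n P)) -> scong (Nu n P) (Nu m (swap n m P)).

Inductive red : proc -> proc -> Prop :=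
| r_in n m P Q R :
    red (Par (Amb n (Par (Act (In_ m) P) Q)) (Amb m R))
        (Amb m (Par (Amb n (Par P Q)) R))
| r_out n m P Q R :
    red (Amb m (Par (Amb n (Par (Act (Out_ m) P) Q)) R))
        (Par (Amb n (Par P Q)) (Amb m R))
| r_open n P Q : red (Par (Act (Open_ n) P) (Amb n Q)) (Par P Q)
| r_nu n P Q : red P Q -> red (Nu n P) (Nu n Q)
| r_amb n P Q : red P Q -> red (Amb n P) (Amb n Q)
| r_par P Q R : red P Q -> red (Par P R) (Par Q R)
| r_struct P P0 Q0 Q : scong P P0 -> red P0 Q0 -> scong Q0 Q -> red P Q.

Definition nus (A : list name) (P : proc) : proc := fold_right Nu P A.

Definition barb (P : proc) (n : name) : Prop :=
  exists A Q R, scong P (nus A (Par (Amb n Q) R)) /\ ~ In n A.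

Inductive ctx : Type :=
| Hole : ctx
| CAmb : name -> ctx -> ctx
| CAct : cap -> ctx -> ctx
| CNu : name -> ctx -> ctx
| CParL : ctx -> proc -> ctx
| CParR : proc -> ctx -> ctx.

Fixpoint fill (C : ctx) (P : proc) : proc :=
  match C with
  | Hole => P
  | CAmb n C' => Amb n (fill C' P)
  | CAct M C' => Act M (fill C' P)
  | CNu n C' => Nu n (fill C' P)
  | CParL C' Q => Par (fill C' P) Q
  | CParR Q C' => Par Q (fill C' P)
  end.

(* Barbed saturated bisimilarity: union of all symmetric relations with the
   saturated barbed-bisimulation property (= the largest such relation). *)
Definition bs_progress (R : proc -> proc -> Prop) : Prop :=
  forall P Q, R P Q -> forall C : ctx,
    (forall n, barb (fill C P) n -> barb (fill C Q) n) /\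
    (forall P', red (fill C P) P' -> exists Q', red (fill C Q) Q' /\ R P' Q').

Definition bisimBS (P Q : proc) : Prop :=
  exists R : proc -> proc -> Prop,
    (forall x y, R x y -> R y x) /\ bs_progress R /\ R P Q.

Definition stable (Pr R : proc -> proc -> Prop) : Prop :=
  forall P Q P', R P Q -> Pr P P' -> exists Q', Pr Q Q' /\ R P' Q'.

Definition Cprime (n m : name) (T1 : proc) (X : proc) : proc :=
  Par X (Act (Open_ n) (Par (Amb m Zero) (Act (Open_ m) T1))).

Definition Popen (n : name) (T1 : proc) (X Y : proc) : Prop :=
  exists (P'' : proc) (m : name),
    ~ In m (fn X) /\ barb P'' m /\ red (Cprime n m T1 X) P'' /\ red P'' Y /\
    ~ barb Y m.

(* P --(-|open n.T1)-->_{M_I} P' : instance of rule (CoOpen), with the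
   restricted names A alpha-converted away from fn(T1). *)
Definition trans_coopen (n : name) (T1 : proc) (P P' : proc) : Prop :=
  exists (A : list name) (P1 P2 : proc),
    scong P (nus A (Par (Amb n P1) P2)) /\ ~ In n A /\
    (forall a, In a A -> ~ In a (fn T1)) /\
    scong P' (nus A (Par (Par P1 T1) P2)).

(* The backward direction is a direct computation: for a fresh [m], the context
   C'[-] first opens the ambient [n[P1]] and then [m[0]].

   The forward direction rests on a normal form: a process is described by the list
   of its top-level ambients and prefixes, after pulling out all restrictions and
   renaming the restricted names to a block [s, s+1, ...] of names above the free ones.
   Structural congruence preserves this list up to a permutation of the block and
   congruence of the component bodies, and a reduction replaces the one or two
   components of a redex by its contractum, leaving the others untouched. Since [m]
   is fresh for [X], the barb on [m] after the first step forces it to consume the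
   guarded prefix [open n] together with a top-level ambient [n[P1]] of [X]; since the
   barb has disappeared after the second step, that step must consume [m[0]], and the
   only capability able to do so is the [open m] just exposed. Stability follows by
   choosing [m] fresh for the bisimilar partner as well and transferring both steps
   and both barb conditions along the bisimulation. *)

From Stdlib Require Import List Arith Lia Permutation Setoid Morphisms FinFun.
Import ListNotations.

(** * Renaming and free names *)

Definition ren_cap (f : name -> name) (M : cap) : cap :=
  match M with In_ n => In_ (f n) | Out_ n => Out_ (f n) | Open_ n => Open_ (f n) end.

Fixpoint ren (f : name -> name) (P : proc) : proc :=
  match P with
  | Zero => Zero
  | Amb n Q => Amb (f n) (ren f Q)
  | Act M Q => Act (ren_cap f M) (ren f Q)
  | Nu n Q => Nu (f n) (ren f Q)
  | Par Q R => Par (ren f Q) (ren f R)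
  end.

Fixpoint names (P : proc) : list name :=
  match P with
  | Zero => []
  | Amb n Q => n :: names Q
  | Act M Q => fn_cap M ++ names Q
  | Nu n Q => n :: names Q
  | Par Q R => names Q ++ names R
  end.

Lemma swap_ren a b P : swap a b P = ren (swapn a b) P.
Proof. induction P as [|? ? IH|[] ? IH|? ? IH|? IH1 ? IH2]; simpl; congruence. Qed.

Lemma ren_cap_ext f g M :
  (forall x, In x (fn_cap M) -> f x = g x) -> ren_cap f M = ren_cap g M.
Proof. destruct M; simpl; intros H; rewrite H; auto. Qed.

Lemma ren_ext f g P : (forall x, In x (names P) -> f x = g x) -> ren f P = ren g P.
Proof.
  induction P; simpl; intros H; f_equal; auto using ren_cap_ext, in_or_app.
Qed.

Lemma ren_cap_comp f g M : ren_cap f (ren_cap g M) = ren_cap (fun x => f (g x)) M.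
Proof. destruct M; reflexivity. Qed.

Lemma ren_comp f g P : ren f (ren g P) = ren (fun x => f (g x)) P.
Proof. induction P; simpl; rewrite ?ren_cap_comp; congruence. Qed.

Lemma ren_cap_id M : ren_cap (fun x => x) M = M.
Proof. destruct M; reflexivity. Qed.

Lemma ren_id P : ren (fun x => x) P = P.
Proof. induction P; simpl; rewrite ?ren_cap_id; congruence. Qed.

Lemma ren_id_on f P : (forall x, f x = x) -> ren f P = P.
Proof. intros H. rewrite <- (ren_id P) at 2. apply ren_ext; auto. Qed.

Lemma in_remove_iff (l : list name) x y : In x (remove Nat.eq_dec y l) <-> In x l /\ x <> y.
Proof. split; [apply in_remove | intros []; apply in_in_remove; auto]. Qed.

Lemma fn_names P x : In x (fn P) -> In x (names P).
Proof.
  induction P; simpl; rewrite ?in_app_iff, ?in_remove_iff; tauto.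
Qed.

Lemma fn_cap_ren f M y : In y (fn_cap (ren_cap f M)) <-> exists x, y = f x /\ In x (fn_cap M).
Proof.
  destruct M; simpl; split.
  all: try (intros [<- | []]; eauto).
  all: intros [x [-> [<- | []]]]; auto.
Qed.

Lemma fn_ren f P y : Injective f -> In y (fn (ren f P)) <-> exists x, y = f x /\ In x (fn P).
Proof.
  intros Hf; revert y; induction P; intros y; simpl.
  - split; [intros [] | intros [x [_ []]]].
  - rewrite IHP. split.
    + intros [<- | [x [-> Hx]]]; eauto.
    + intros [x [-> [<- | Hx]]]; eauto.
  - rewrite in_app_iff, fn_cap_ren, IHP. split.
    + intros [[x [-> Hx]] | [x [-> Hx]]]; exists x; rewrite in_app_iff; auto.
    + intros [x [-> Hx]]; rewrite in_app_iff in Hx; destruct Hx; eauto.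
  - rewrite in_remove_iff, IHP. split.
    + intros [[x [-> Hx]] Hn]. exists x. rewrite in_remove_iff. split; auto.
    + intros [x [-> Hx]]. rewrite in_remove_iff in Hx. destruct Hx as [Hx Hxn].
      split; eauto.
  - rewrite in_app_iff, IHP1, IHP2. split.
    + intros [[x [-> Hx]] | [x [-> Hx]]]; exists x; rewrite in_app_iff; auto.
    + intros [x [-> Hx]]; rewrite in_app_iff in Hx; destruct Hx; eauto.
Qed.

Lemma swapn_l a b : swapn a b a = b.
Proof. unfold swapn. rewrite Nat.eqb_refl. reflexivity. Qed.

Lemma swapn_r a b : swapn a b b = a.
Proof. unfold swapn. destruct (Nat.eqb_spec b a); subst; rewrite ?Nat.eqb_refl; reflexivity. Qed.

Lemma swapn_other a b x : x <> a -> x <> b -> swapn a b x = x.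
Proof. intros. unfold swapn. destruct (Nat.eqb_spec x a), (Nat.eqb_spec x b); congruence. Qed.

Lemma swapn_involutive a b x : swapn a b (swapn a b x) = x.
Proof.
  destruct (Nat.eq_dec x a) as [->|Ha]; [rewrite swapn_l, swapn_r; reflexivity|].
  destruct (Nat.eq_dec x b) as [->|Hb]; [rewrite swapn_r, swapn_l; reflexivity|].
  rewrite (swapn_other a b x); rewrite ?swapn_other; auto.
Qed.

Lemma swapn_injective a b : Injective (swapn a b).
Proof.
  intros x y E. rewrite <- (swapn_involutive a b x), <- (swapn_involutive a b y), E.
  reflexivity.
Qed.

Lemma fn_swap a b P y : In y (fn (swap a b P)) <-> In (swapn a b y) (fn P).
Proof.
  rewrite swap_ren, fn_ren by apply swapn_injective. split.
  - intros [x [-> Hx]]. rewrite swapn_involutive; auto.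
  - intros H. exists (swapn a b y). rewrite swapn_involutive; auto.
Qed.

Lemma fn_scong P Q : scong P Q -> forall x, In x (fn P) <-> In x (fn Q).
Proof.
  induction 1; intros x; cbn [fn In fn_cap]; rewrite ?in_remove_iff, ?in_app_iff;
    cbn [In]; rewrite ?in_remove_iff, ?in_app_iff;
    rewrite ?IHscong, ?IHscong1, ?IHscong2; try tauto.
  - split; [tauto|]. intros [Hx | [Hx Hxn]]; [split; [auto | intros ->; auto] | tauto].
  - split; [tauto|]. intros [<- | [Hx Hxn]]; [split; auto | tauto].
  - split; [tauto|]. intros [Hx | [Hx Hxn]]; [split; [auto | intros ->; auto] | tauto].
  - rewrite fn_swap. split.
    + intros [Hx Hxn].
      assert (x <> m) by (intros ->; apply H; apply in_remove_iff; auto).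
      rewrite swapn_other; auto.
    + intros [Hx Hxn]. destruct (Nat.eq_dec x n) as [->|Hn].
      * rewrite swapn_l in Hx. exfalso. apply H. apply in_remove_iff; auto.
      * rewrite swapn_other in Hx; auto.
Qed.

Lemma ren_swap f a b P : Injective f -> ren f (swap a b P) = swap (f a) (f b) (ren f P).
Proof.
  intros Hf. rewrite !swap_ren, !ren_comp. apply ren_ext. intros x _.
  destruct (Nat.eq_dec x a) as [->|Ha]; [rewrite !swapn_l; reflexivity|].
  destruct (Nat.eq_dec x b) as [->|Hb]; [rewrite !swapn_r; reflexivity|].
  rewrite !swapn_other; auto; intros E; apply Hf in E; auto.
Qed.

Lemma ren_scong f P Q : Injective f -> scong P Q -> scong (ren f P) (ren f Q).
Proof.
  intros Hf; induction 1; simpl; try (constructor; auto; fail).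
  - eapply sc_trans; eauto.
  - apply sc_nu_par. rewrite fn_ren by auto. intros [x [E Hx]]. apply Hf in E; subst; auto.
  - apply sc_nu_act. rewrite fn_cap_ren. intros [x [E Hx]]. apply Hf in E; subst; auto.
  - rewrite ren_swap by auto. apply sc_alpha.
    change (Nu (f n) (ren f P)) with (ren f (Nu n P)).
    rewrite fn_ren by auto. intros [x [E Hx]]. apply Hf in E; subst; auto.
Qed.

#[export] Instance scong_equiv : Equivalence scong.
Proof. split; [intro; apply sc_refl | intros ??; apply sc_sym | intros ???; apply sc_trans]. Qed.
#[export] Instance Par_proper : Proper (scong ==> scong ==> scong) Par.
Proof. intros ?? H ?? H'; apply sc_par; auto. Qed.
#[export] Instance Amb_proper n : Proper (scong ==> scong) (Amb n).
Proof. intros ?? H; apply sc_amb; auto. Qed.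
#[export] Instance Act_proper M : Proper (scong ==> scong) (Act M).
Proof. intros ?? H; apply sc_act; auto. Qed.
#[export] Instance Nu_proper n : Proper (scong ==> scong) (Nu n).
Proof. intros ?? H; apply sc_nu; auto. Qed.

Lemma par_comm P Q : scong (Par P Q) (Par Q P). Proof. apply sc_par_comm. Qed.
Lemma par_assoc P Q R : scong (Par (Par P Q) R) (Par P (Par Q R)). Proof. apply sc_par_assoc. Qed.
Lemma par_zero P : scong (Par P Zero) P. Proof. apply sc_par_zero. Qed.
Lemma par_zero_l P : scong (Par Zero P) P. Proof. rewrite par_comm; apply par_zero. Qed.
Lemma par_left_comm P Q R : scong (Par P (Par Q R)) (Par Q (Par P R)).
Proof. rewrite <- par_assoc, (par_comm P Q), par_assoc. reflexivity. Qed.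

#[export] Instance nus_proper A : Proper (scong ==> scong) (nus A).
Proof. induction A; intros P Q H; simpl; auto. rewrite (IHA P Q H). reflexivity. Qed.

Lemma nus_app A B P : nus (A ++ B) P = nus A (nus B P).
Proof. apply fold_right_app. Qed.

Lemma fn_nus A P x : In x (fn (nus A P)) <-> In x (fn P) /\ ~ In x A.
Proof.
  induction A; simpl; [tauto|].
  rewrite in_remove_iff, IHA. split.
  - intros [[Hx HA] Ha]. split; auto. intros [->|?]; auto.
  - intros [Hx HA]. repeat split; auto.
Qed.

Lemma nus_par_l A P Z : (forall a, In a A -> ~ In a (fn Z)) ->
  scong (nus A (Par Z P)) (Par Z (nus A P)).
Proof.
  induction A; simpl; intros H; [reflexivity|].
  rewrite IHA by auto. apply sc_nu_par. auto.
Qed.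

Lemma nus_par_r A P Z : (forall a, In a A -> ~ In a (fn Z)) ->
  scong (nus A (Par P Z)) (Par (nus A P) Z).
Proof. intros H. rewrite (par_comm P Z), nus_par_l by auto. apply par_comm. Qed.

Lemma nus_amb A a P : ~ In a A -> scong (nus A (Amb a P)) (Amb a (nus A P)).
Proof.
  induction A; simpl; intros H; [reflexivity|].
  rewrite IHA by tauto. apply sc_nu_amb. intros ->; auto.
Qed.

Lemma nus_act A M P : (forall x, In x (fn_cap M) -> ~ In x A) ->
  scong (nus A (Act M P)) (Act M (nus A P)).
Proof.
  induction A; simpl; intros H; [reflexivity|].
  rewrite IHA by (intros x Hx Hx'; apply (H x); auto).
  apply sc_nu_act. intros Hx; apply (H a); auto.
Qed.

Lemma nus_perm A B P : Permutation A B -> scong (nus A P) (nus B P).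
Proof.
  induction 1; simpl; try reflexivity.
  - rewrite IHPermutation; reflexivity.
  - apply sc_nu_nu.
  - etransitivity; eauto.
Qed.

Lemma red_nus A P Q : red P Q -> red (nus A P) (nus A Q).
Proof. induction A; simpl; auto using r_nu. Qed.

Fixpoint par_list (l : list proc) : proc :=
  match l with [] => Zero | P :: l => Par P (par_list l) end.

Lemma par_list_app l1 l2 : scong (par_list (l1 ++ l2)) (Par (par_list l1) (par_list l2)).
Proof.
  induction l1; simpl; [symmetry; apply par_zero_l|].
  rewrite IHl1. symmetry; apply par_assoc.
Qed.

Lemma par_list_perm l l' : Permutation l l' -> scong (par_list l) (par_list l').
Proof.
  induction 1; simpl; try reflexivity.
  - rewrite IHPermutation; reflexivity.
  - apply par_left_comm.
  - etransitivity; eauto.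
Qed.

Lemma ren_par_list f l : ren f (par_list l) = par_list (map (ren f) l).
Proof. induction l; simpl; congruence. Qed.

Lemma fn_par_list l x : In x (fn (par_list l)) <-> exists P, In P l /\ In x (fn P).
Proof.
  induction l; simpl; [split; [tauto | intros [P [[] _]]]|].
  rewrite in_app_iff, IHl. split.
  - intros [H | [P [HP Hx]]]; eauto.
  - intros [P [[<- | HP] Hx]]; eauto.
Qed.

Lemma names_par_list l x : In x (names (par_list l)) <-> exists P, In P l /\ In x (names P).
Proof.
  induction l; simpl; [split; [tauto | intros [P [[] _]]]|].
  rewrite in_app_iff, IHl. split.
  - intros [H | [P [HP Hx]]]; eauto.
  - intros [P [[<- | HP] Hx]]; eauto.
Qed.

Fixpoint nu_count (P : proc) : nat :=
  match P with
  | Zero => 0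
  | Amb _ Q | Act _ Q => nu_count Q
  | Nu _ Q => S (nu_count Q)
  | Par Q R => nu_count Q + nu_count R
  end.

Lemma nu_count_ren f P : nu_count (ren f P) = nu_count P.
Proof. induction P; simpl; auto. Qed.

Lemma nu_count_swap a b P : nu_count (swap a b P) = nu_count P.
Proof. rewrite swap_ren; apply nu_count_ren. Qed.

Lemma nu_count_scong P Q : scong P Q -> nu_count P = nu_count Q.
Proof. induction 1; simpl; rewrite ?nu_count_swap; lia. Qed.

Lemma nu_count_red P Q : red P Q -> nu_count Q = nu_count P.
Proof.
  induction 1; simpl; try lia.
  apply nu_count_scong in H. apply nu_count_scong in H1. lia.
Qed.

Lemma nu_count_nus A P : nu_count (nus A P) = length A + nu_count P.
Proof. induction A; simpl; auto. Qed.

Lemma nu_count_par_list l : (forall P, In P l -> nu_count P = 0) -> nu_count (par_list l) = 0.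
Proof. induction l; simpl; intros H; auto. rewrite H, IHl; auto. Qed.

Lemma fn_red P Q : red P Q -> forall x, In x (fn Q) -> In x (fn P).
Proof.
  induction 1 as [| | |n P Q Hr IH|n P Q Hr IH|P Q R Hr IH|P P0 Q0 Q H1 Hr IH H2]; intros x;
    repeat progress (cbn [fn In fn_cap]; rewrite ?in_remove_iff, ?in_app_iff); try tauto.
  - intros [? ?]; split; auto.
  - intros [? | ?]; auto.
  - intros [? | ?]; auto.
  - intros Hx. apply (fn_scong _ _ H1), IH, (fn_scong _ _ H2); auto.
Qed.

Lemma barb_fn P m : barb P m -> In m (fn P).
Proof.
  intros [A [Q [R [H Hm]]]]. apply (fn_scong _ _ H), fn_nus. simpl. auto.
Qed.

(** * Normal forms *)

Definition fupd (r : name -> name) k v : name -> name := fun x => if Nat.eqb x k then v else r x.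

Lemma fupd_eq r k v : fupd r k v k = v.
Proof. unfold fupd. rewrite Nat.eqb_refl; auto. Qed.

Lemma fupd_neq r k v x : x <> k -> fupd r k v x = r x.
Proof. unfold fupd. intros H. destruct (Nat.eqb_spec x k); congruence. Qed.

(* [comps r s P] lists the top-level ambients and prefixes of [P], free names
   renamed by [r]. Every restriction, also one under an ambient or a prefix (this
   congruence extrudes those), is dropped and its name replaced, in order of
   occurrence, by [s], [s+1], ... *)
Fixpoint comps (r : name -> name) (s : nat) (P : proc) : list proc :=
  match P with
  | Zero => []
  | Amb n Q => [Amb (r n) (par_list (comps r s Q))]
  | Act M Q => [Act (ren_cap r M) (par_list (comps r s Q))]
  | Nu n Q => comps (fupd r n s) (S s) Q
  | Par Q R => comps r s Q ++ comps r (s + nu_count Q) R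
  end.

Lemma comps_ext P : forall r r' s, (forall x, In x (fn P) -> r x = r' x) ->
  comps r s P = comps r' s P.
Proof.
  induction P; intros r r' s H; simpl in *; auto.
  - rewrite H, (IHP r r') by auto. reflexivity.
  - rewrite (IHP r r'), (ren_cap_ext r r') by (intros; apply H; apply in_or_app; auto).
    reflexivity.
  - apply IHP. intros x Hx. unfold fupd. destruct (Nat.eqb_spec x n); auto.
    apply H. apply in_remove_iff; auto.
  - rewrite (IHP1 r r'), (IHP2 r r') by (intros; apply H; apply in_or_app; auto).
    reflexivity.
Qed.

Lemma ren_comps P : forall p r r' s s', (forall x, In x (fn P) -> p (r x) = r' x) ->
  (forall t, s <= t < s + nu_count P -> p t = t - s + s') ->
  map (ren p) (comps r s P) = comps r' s' P.
Proof.
  induction P; intros p r r' s s' Hr Hs; simpl in *; auto.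
  - rewrite Hr, ren_par_list, (IHP p r r' s s') by auto. reflexivity.
  - rewrite ren_par_list, (IHP p r r' s s'), ren_cap_comp, (ren_cap_ext _ r')
      by (auto; intros; apply Hr; apply in_or_app; auto).
    reflexivity.
  - apply IHP.
    + intros x Hx. unfold fupd. destruct (Nat.eqb_spec x n).
      * rewrite Hs by lia. lia.
      * apply Hr. apply in_remove_iff; auto.
    + intros t Ht. rewrite Hs by lia. lia.
  - rewrite map_app, (IHP1 p r r' s s'), (IHP2 p r r' (s + nu_count P1) (s' + nu_count P1));
      auto; intros; try (apply Hr; apply in_or_app; auto); rewrite Hs; lia.
Qed.

Lemma comps_swap P : forall r s a b,
  comps r s (swap a b P) = comps (fun x => r (swapn a b x)) s P.
Proof.
  induction P; intros r s a b; simpl; rewrite ?IHP; auto.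
  - destruct c; reflexivity.
  - apply comps_ext. intros x _. unfold fupd.
    destruct (Nat.eqb_spec (swapn a b x) (swapn a b n)), (Nat.eqb_spec x n);
      subst; try congruence.
    apply swapn_injective in e; congruence.
  - rewrite IHP1, IHP2, nu_count_swap. reflexivity.
Qed.

Lemma names_comps P : forall r s x, In x (names (par_list (comps r s P))) ->
  (exists y, In y (fn P) /\ x = r y) \/ s <= x < s + nu_count P.
Proof.
  induction P; intros r s x H; simpl in *.
  - destruct H.
  - rewrite app_nil_r in H. destruct H as [<- | H]; [left; eauto|].
    destruct (IHP _ _ _ H) as [[y [Hy ->]] | Hx]; [left; eauto | right; auto].
  - rewrite app_nil_r, in_app_iff in H. destruct H as [H | H].
    + left. destruct c; simpl in H; destruct H as [<- | []]; exists n; simpl; auto.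
    + destruct (IHP _ _ _ H) as [[y [Hy ->]] | Hx]; [|right; auto].
      left; exists y; rewrite in_app_iff; auto.
  - destruct (IHP _ _ _ H) as [[y [Hy ->]] | Hx]; [|right; lia].
    destruct (Nat.eq_dec y n) as [-> | Hn].
    + right. rewrite fupd_eq. lia.
    + left. exists y. rewrite fupd_neq by auto. split; auto. apply in_remove_iff; auto.
  - apply names_par_list in H. destruct H as [a [Ha Hx]]. apply in_app_or in Ha.
    destruct Ha as [Ha | Ha].
    + destruct (IHP1 r s x) as [[y [Hy ->]] | Hx']; [apply names_par_list; eauto| |lia].
      left; exists y; rewrite in_app_iff; auto.
    + destruct (IHP2 r (s + nu_count P1) x) as [[y [Hy ->]] | Hx'];
        [apply names_par_list; eauto| |lia].
      left; exists y; rewrite in_app_iff; auto.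
Qed.

Lemma names_in_comps r s P a x : In a (comps r s P) -> In x (names a) ->
  (exists y, In y (fn P) /\ x = r y) \/ s <= x < s + nu_count P.
Proof. intros Ha Hx. apply names_comps, names_par_list. eauto. Qed.

Lemma fn_comps r s P x : In x (fn (par_list (comps r s P))) ->
  (exists y, In y (fn P) /\ x = r y) \/ s <= x < s + nu_count P.
Proof. intros. apply names_comps, fn_names. auto. Qed.

Lemma fn_comps_id s P x : In x (fn (par_list (comps id s P))) ->
  In x (fn P) \/ s <= x < s + nu_count P.
Proof. intros H. destruct (fn_comps _ _ _ _ H) as [[y [Hy ->]] | Hx]; auto. Qed.

Lemma fn_in_comps P : forall r s y, In y (fn P) -> In (r y) (fn (par_list (comps r s P))).
Proof.
  induction P; intros r s y H; simpl in *.
  - destruct H.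
  - rewrite app_nil_r. destruct H as [-> | H]; auto.
  - rewrite app_nil_r, in_app_iff. rewrite in_app_iff in H. destruct H as [H | H]; auto.
    left. destruct c; simpl in *; destruct H as [-> | []]; auto.
  - apply in_remove_iff in H. destruct H. rewrite <- (fupd_neq r n s y) by auto. auto.
  - apply fn_par_list. rewrite in_app_iff in H. destruct H as [H | H].
    + apply (IHP1 r s), fn_par_list in H. destruct H as [a [Ha Hy]].
      exists a; rewrite in_app_iff; auto.
    + apply (IHP2 r (s + nu_count P1)), fn_par_list in H. destruct H as [a [Ha Hy]].
      exists a; rewrite in_app_iff; auto.
Qed.

Lemma nu_count_comps P : forall r s a, In a (comps r s P) -> nu_count a = 0.
Proof.
  induction P; intros r s a H; simpl in H.
  - destruct H.
  - destruct H as [<- | []]. apply nu_count_par_list. eauto.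
  - destruct H as [<- | []]. apply nu_count_par_list. eauto.
  - eauto.
  - apply in_app_or in H. destruct H; eauto.
Qed.

Fixpoint fupd_list (r : name -> name) (A : list name) (s : nat) : name -> name :=
  match A with [] => r | a :: A => fupd_list (fupd r a s) A (S s) end.

Lemma comps_nus A : forall r s P,
  comps r s (nus A P) = comps (fupd_list r A s) (s + length A) P.
Proof.
  induction A; intros r s P; simpl; [rewrite Nat.add_0_r; auto|].
  rewrite IHA. replace (S s + length A) with (s + S (length A)) by lia. auto.
Qed.

Lemma fupd_list_notin A : forall r s m, ~ In m A -> fupd_list r A s m = r m.
Proof.
  induction A; intros r s m H; simpl in *; auto.
  rewrite IHA by tauto. apply fupd_neq. intros ->; auto.
Qed.

Lemma fupd_list_seq k : forall s x, fupd_list id (seq s k) s x = x.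
Proof.
  enough (forall r s, (forall x, r x = x) -> forall x, fupd_list r (seq s k) s x = x) by auto.
  induction k; intros r s H x; simpl; auto.
  apply IHk. intros y. unfold fupd. destruct (Nat.eqb_spec y s); subst; auto.
Qed.

Lemma comps_nus_seq s k P : comps id s (nus (seq s k) P) = comps id (s + k) P.
Proof.
  rewrite comps_nus, length_seq. apply comps_ext. intros x _. apply fupd_list_seq.
Qed.

Fixpoint size (P : proc) : nat :=
  match P with
  | Zero => 1
  | Amb _ Q | Act _ Q | Nu _ Q => S (size Q)
  | Par Q R => S (size Q + size R)
  end.

Lemma size_ren f P : size (ren f P) = size P.
Proof. induction P; simpl; auto. Qed.

Lemma scong_normal_form_aux N : forall P s, size P <= N -> (forall x, In x (fn P) -> x < s) ->
  scong P (nus (seq s (nu_count P)) (par_list (comps id s P))).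
Proof.
  induction N; intros P s HP Hs; [destruct P; simpl in HP; lia|].
  destruct P; simpl in *.
  - reflexivity.
  - rewrite par_zero, nus_amb, <- IHN; [reflexivity | lia | auto |].
    rewrite in_seq. specialize (Hs n (or_introl eq_refl)). unfold id. lia.
  - rewrite par_zero, ren_cap_id, nus_act.
    + rewrite <- IHN; [reflexivity | lia | intros; apply Hs; apply in_or_app; auto].
    + intros x Hx. rewrite in_seq. specialize (Hs x (in_or_app _ _ _ (or_introl Hx))). lia.
  - assert (Hsn : ~ In s (fn (Nu n P))) by (intros H; apply Hs in H; lia).
    rewrite (sc_alpha n s P Hsn). apply sc_nu.
    assert (E : comps (fupd id n s) (S s) P = comps id (S s) (swap n s P)).
    { rewrite comps_swap. apply comps_ext. intros x Hx. unfold id, fupd.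
      destruct (Nat.eqb_spec x n) as [-> | Hxn]; [rewrite swapn_l; auto|].
      rewrite swapn_other; auto. intros ->. apply Hsn. simpl. apply in_remove_iff; auto. }
    rewrite E, <- (nu_count_swap n s P). apply IHN.
    + rewrite swap_ren, size_ren. lia.
    + intros x Hx. apply fn_swap in Hx.
      destruct (Nat.eq_dec x n) as [-> | Hxn].
      * rewrite swapn_l in Hx. destruct (Nat.eq_dec s n) as [-> | Hsn']; [lia|].
        exfalso. apply Hsn. simpl. apply in_remove_iff; auto.
      * destruct (Nat.eq_dec x s) as [-> | Hxs]; [lia|].
        rewrite swapn_other in Hx by auto.
        assert (x < s) by (apply Hs; apply in_remove_iff; auto). lia.
  - assert (Hs1 : forall x, In x (fn P1) -> x < s) by (intros; apply Hs, in_or_app; auto).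
    assert (Hs2 : forall x, In x (fn P2) -> x < s) by (intros; apply Hs, in_or_app; auto).
    rewrite seq_app, nus_app, par_list_app, nus_par_l.
    + rewrite <- (IHN P2); [| lia | intros x Hx; specialize (Hs2 x Hx); lia].
      rewrite nus_par_r.
      * rewrite <- (IHN P1); [reflexivity | lia | auto].
      * intros a Ha Ha'. apply in_seq in Ha. specialize (Hs2 a Ha'). lia.
    + intros a Ha Ha'. apply in_seq in Ha.
      destruct (fn_comps_id _ _ _ Ha') as [Hy | Hy]; [specialize (Hs1 a Hy)|]; lia.
Qed.

Lemma scong_normal_form P s : (forall x, In x (fn P) -> x < s) ->
  scong P (nus (seq s (nu_count P)) (par_list (comps id s P))).
Proof. intros. eapply scong_normal_form_aux; eauto. Qed.

Lemma scong_comps P s : nu_count P = 0 -> scong P (par_list (comps id s P)).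
Proof.
  revert s; induction P; intros s H; simpl in *; try lia.
  - reflexivity.
  - rewrite par_zero, <- IHP; auto. reflexivity.
  - rewrite par_zero, ren_cap_id, <- IHP; auto. reflexivity.
  - rewrite par_list_app, <- IHP1, <- IHP2; try lia. reflexivity.
Qed.

(** * Block bijections and alpha-conversion *)

Lemma lt_list_max (l : list name) x : In x l -> x < S (list_max l).
Proof.
  intros Hx. assert (Hl : list_max l <= list_max l) by lia.
  apply list_max_le in Hl. rewrite Forall_forall in Hl. apply Hl in Hx. lia.
Qed.

Lemma fresh_name (l : list name) : exists d, ~ In d l.
Proof. exists (S (list_max l)). intros H. apply lt_list_max in H. lia. Qed.

Lemma swap_same b P : swap b b P = P.
Proof.
  rewrite swap_ren. apply ren_id_on. intros x.
  unfold swapn. destruct (Nat.eqb_spec x b); auto.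
Qed.

Lemma swap_nus b c A P : (forall x, In x A -> x <> b /\ x <> c) ->
  swap b c (nus A P) = nus A (swap b c P).
Proof.
  induction A; simpl; intros H; auto.
  rewrite IHA, swapn_other by (intros; apply H; auto). reflexivity.
Qed.

(* Exchanging two bound names goes through a third name [d] fresh for [P]. *)
Lemma scong_nu_nu_swap b c P : b <> c ->
  scong (Nu b (Nu c P)) (Nu b (Nu c (swap b c P))).
Proof.
  intros Hbc. destruct (fresh_name (b :: c :: names P)) as [d Hd]. simpl in Hd.
  assert (Hdb : d <> b) by (intros ->; tauto). assert (Hdc : d <> c) by (intros ->; tauto).
  assert (HdP : ~ In d (names P)) by tauto.
  assert (HdfP : ~ In d (fn P)) by (intro; apply HdP, fn_names; auto).
  rewrite (sc_alpha c d P) by (simpl; rewrite in_remove_iff; tauto).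
  rewrite (sc_alpha b c (Nu d (swap c d P)))
    by (simpl; rewrite !in_remove_iff, fn_swap, swapn_l; tauto).
  simpl. rewrite (swapn_other b c d) by auto.
  rewrite (sc_alpha d b (swap b c (swap c d P)))
    by (simpl; rewrite !in_remove_iff, !fn_swap, swapn_l, swapn_l; tauto).
  rewrite sc_nu_nu.
  replace (swap d b (swap b c (swap c d P))) with (swap b c P); [reflexivity|].
  rewrite !swap_ren, !ren_comp. apply ren_ext. intros x Hx.
  assert (x <> d) by (intros ->; auto).
  destruct (Nat.eq_dec x b) as [-> | Hxb].
  - rewrite (swapn_other c d b), swapn_l, (swapn_other d b c) by auto. reflexivity.
  - destruct (Nat.eq_dec x c) as [-> | Hxc].
    + rewrite swapn_l, (swapn_other b c d), swapn_l, swapn_r by auto. reflexivity.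
    + rewrite (swapn_other c d x), (swapn_other b c x), (swapn_other d b x) by auto.
      reflexivity.
Qed.

Lemma nus_swap A b c P : NoDup A -> In b A -> In c A ->
  scong (nus A P) (nus A (swap b c P)).
Proof.
  intros HA Hb Hc. destruct (Nat.eq_dec b c) as [<- | Hbc]; [rewrite swap_same; reflexivity|].
  apply in_split in Hb. destruct Hb as [A1 [A2 ->]].
  assert (Hc' : In c (A1 ++ A2)).
  { apply in_app_or in Hc. apply in_or_app. destruct Hc as [Hc | [Hc | Hc]]; auto. congruence. }
  apply in_split in Hc'. destruct Hc' as [B1 [B2 HB]].
  assert (Hp : Permutation (A1 ++ b :: A2) (b :: c :: (B1 ++ B2))).
  { rewrite <- Permutation_middle. apply perm_skip. rewrite HB. symmetry. apply Permutation_middle. }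
  assert (Hnd : NoDup (b :: c :: B1 ++ B2)) by (eapply Permutation_NoDup; eauto).
  inversion Hnd as [|? ? Hb' Hnd']; subst. inversion Hnd' as [|? ? Hc'' _]; subst.
  rewrite (nus_perm _ _ P Hp), (nus_perm _ _ (swap b c P) Hp). simpl.
  rewrite scong_nu_nu_swap by auto. rewrite swap_nus; [reflexivity|].
  intros x Hx. split; intros ->; [apply Hb' | apply Hc'']; simpl; auto.
Qed.

Record block_bij (s k : nat) (p q : name -> name) : Prop := {
  bij_qp : forall x, q (p x) = x;
  bij_pq : forall x, p (q x) = x;
  bij_out : forall x, x < s \/ s + k <= x -> p x = x }.

Section BlockBij.
Variables (s k : nat) (p q : name -> name).
Hypothesis Hpq : block_bij s k p q.

Lemma block_bij_injective : Injective p.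
Proof. intros x y E. rewrite <- (bij_qp _ _ _ _ Hpq x), <- (bij_qp _ _ _ _ Hpq y), E. auto. Qed.

Lemma block_bij_inv : block_bij s k q p.
Proof.
  destruct Hpq as [Hqp Hpq' Hout]. split; auto.
  intros x Hx. rewrite <- (Hout x Hx) at 1. apply Hqp.
Qed.

Lemma block_bij_in x : s <= x < s + k -> s <= p x < s + k.
Proof.
  destruct Hpq as [Hqp Hpq' Hout]. intros Hx.
  destruct (Nat.lt_ge_cases (p x) s);
    [|destruct (Nat.lt_ge_cases (p x) (s + k)); [lia|]].
  all: assert (E : p (p x) = p x) by (apply Hout; lia);
       apply (f_equal q) in E; rewrite !Hqp in E; lia.
Qed.

Lemma block_bij_fixed x y : x < s -> p y = x -> y = x.
Proof.
  intros Hx E. rewrite <- (bij_qp _ _ _ _ Hpq y), E.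
  apply (bij_out _ _ _ _ block_bij_inv). auto.
Qed.
End BlockBij.

Lemma block_bij_id s k : block_bij s k id id.
Proof. split; reflexivity. Qed.

Lemma block_bij_comp s k p q p' q' :
  block_bij s k p q -> block_bij s k p' q' ->
  block_bij s k (fun x => p' (p x)) (fun x => q (q' x)).
Proof.
  intros [H1 H2 H3] [G1 G2 G3]. split.
  - intros x. rewrite G1, H1; auto.
  - intros x. rewrite H2, G2; auto.
  - intros x Hx. rewrite H3, G3; auto.
Qed.

Lemma block_bij_widen s k s' k' p q : block_bij s k p q -> s' <= s -> s + k <= s' + k' ->
  block_bij s' k' p q.
Proof. intros [H1 H2 H3] Hs Hk. split; auto. intros x Hx. apply H3. lia. Qed.

Lemma nus_ren_block k : forall s p q, block_bij s k p q ->
  forall P, scong (nus (seq s k) P) (nus (seq s k) (ren p P)).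
Proof.
  induction k; intros s p q Hpq P.
  - simpl. rewrite ren_id_on; [reflexivity|]. intros x. apply (bij_out _ _ _ _ Hpq). lia.
  - (* first move [s + k] back to itself with a transposition, then use induction *)
    set (b := s + k). set (c := p b). set (t := swapn b c).
    assert (Hc : s <= c < s + S k) by (apply (block_bij_in _ _ _ _ Hpq); unfold b; lia).
    destruct Hpq as [H1 H2 H3].
    assert (Hp1 : block_bij s k (fun x => t (p x)) (fun x => q (t x))).
    { split.
      - intros x. unfold t. rewrite swapn_involutive. auto.
      - intros x. unfold t. rewrite H2. apply swapn_involutive.
      - intros x Hx. destruct (Nat.eq_dec x b) as [-> | Hxb]; [apply swapn_r|].
        unfold t. rewrite H3 by (unfold b in *; lia). apply swapn_other; auto.
        intros ->. unfold b in *; lia. }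
    assert (E : ren p P = swap b c (ren (fun x => t (p x)) P)).
    { rewrite swap_ren, ren_comp. apply ren_ext. intros x _. unfold t. rewrite swapn_involutive. auto. }
    assert (F : forall Y, nus (seq s k) (Nu b Y) = nus (seq s k ++ [b]) Y)
      by (intros; rewrite nus_app; reflexivity).
    rewrite seq_S, !nus_app. simpl. fold b. rewrite E, !F.
    rewrite <- (nus_swap _ b c); [| rewrite <- seq_S; apply seq_NoDup
                               | apply in_or_app; simpl; auto
                               | rewrite <- seq_S; apply in_seq; lia].
    rewrite <- !F, (IHk s _ _ Hp1). simpl. unfold t at 1; fold c. rewrite swapn_r. reflexivity.
Qed.

(** * Structural congruence on normal forms *)

Definition comp_eq (P Q : proc) : Prop :=
  match P, Q with
  | Amb a B, Amb a' B' => a = a' /\ scong B B'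
  | Act M B, Act M' B' => M = M' /\ scong B B'
  | _, _ => P = Q
  end.

Lemma comp_eq_refl P : comp_eq P P.
Proof. destruct P; simpl; auto; split; reflexivity. Qed.

Lemma comp_eq_sym P Q : comp_eq P Q -> comp_eq Q P.
Proof. destruct P, Q; simpl; intros H; try congruence; destruct H; split; auto; symmetry; auto. Qed.

Lemma comp_eq_trans P Q R : comp_eq P Q -> comp_eq Q R -> comp_eq P R.
Proof.
  destruct P, Q; simpl; intros H1 H2; try discriminate; subst; auto;
    destruct R; simpl in *; try discriminate; try (destruct H1; discriminate);
    try (destruct H2; discriminate); auto.
  all: destruct H1, H2; split; [congruence | etransitivity; eauto].
Qed.

Lemma comp_eq_scong P Q : comp_eq P Q -> scong P Q.
Proof.
  destruct P, Q; simpl; intros H; try discriminate; try (inversion H; reflexivity);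
    destruct H as [-> H]; rewrite H; reflexivity.
Qed.

Lemma comp_eq_ren f P Q : Injective f -> comp_eq P Q -> comp_eq (ren f P) (ren f Q).
Proof.
  intros Hf H. destruct P, Q; simpl in *; try discriminate; try (inversion H; reflexivity);
    destruct H as [-> H]; split; auto; apply ren_scong; auto.
Qed.

Lemma comp_eq_Amb_l a B Q : comp_eq (Amb a B) Q -> exists B', Q = Amb a B' /\ scong B B'.
Proof. destruct Q; simpl; intros H; try discriminate. destruct H; subst; eauto. Qed.

Lemma comp_eq_Amb_r a B P : comp_eq P (Amb a B) -> exists B', P = Amb a B' /\ scong B' B.
Proof. destruct P; simpl; intros H; try discriminate. destruct H; subst; eauto. Qed.

Lemma comp_eq_Act_r M B P : comp_eq P (Act M B) -> exists B', P = Act M B' /\ scong B' B.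
Proof. destruct P; simpl; intros H; try discriminate. destruct H; subst; eauto. Qed.

Lemma Forall2_comp_eq_refl l : Forall2 comp_eq l l.
Proof. induction l; constructor; auto using comp_eq_refl. Qed.

Lemma Forall2_comp_eq_sym l l' : Forall2 comp_eq l l' -> Forall2 comp_eq l' l.
Proof. induction 1; constructor; auto using comp_eq_sym. Qed.

Lemma Forall2_comp_eq_trans l1 l2 l3 :
  Forall2 comp_eq l1 l2 -> Forall2 comp_eq l2 l3 -> Forall2 comp_eq l1 l3.
Proof.
  intros H; revert l3; induction H; intros l3 H'; inversion H'; subst; constructor;
    eauto using comp_eq_trans.
Qed.

Lemma Forall2_comp_eq_in_l l l' P : Forall2 comp_eq l l' -> In P l ->
  exists P', In P' l' /\ comp_eq P P'.
Proof.
  induction 1; simpl; intros HP; [destruct HP|].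
  destruct HP as [<- | HP]; [eauto|]. destruct (IHForall2 HP) as [P' [HP' E]]; eauto.
Qed.

Lemma Forall2_comp_eq_in_r l l' P' : Forall2 comp_eq l l' -> In P' l' ->
  exists P, In P l /\ comp_eq P P'.
Proof.
  intros H HP'. apply Forall2_comp_eq_sym in H.
  destruct (Forall2_comp_eq_in_l _ _ _ H HP') as [P [HP E]]. eauto using comp_eq_sym.
Qed.

Lemma Forall2_comp_eq_par_list l l' : Forall2 comp_eq l l' -> scong (par_list l) (par_list l').
Proof. induction 1; simpl; [reflexivity|]. rewrite (comp_eq_scong _ _ H), IHForall2. reflexivity. Qed.

Definition comps_equiv (l l' : list proc) : Prop :=
  exists l2, Permutation l l2 /\ Forall2 comp_eq l2 l'.

Lemma comps_equiv_refl l : comps_equiv l l.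
Proof. exists l; split; auto using Forall2_comp_eq_refl. Qed.

Lemma comps_equiv_perm l l' : Permutation l l' -> comps_equiv l l'.
Proof. exists l'; split; auto using Forall2_comp_eq_refl. Qed.

Lemma comps_equiv_Forall2 l l' : Forall2 comp_eq l l' -> comps_equiv l l'.
Proof. exists l; split; auto. Qed.

Lemma comps_equiv_sym l l' : comps_equiv l l' -> comps_equiv l' l.
Proof.
  intros [l2 [H1 H2]]. destruct (Permutation_Forall2 (Permutation_sym H1) H2) as [l3 [H3 H4]].
  exists l3; split; auto using Forall2_comp_eq_sym.
Qed.

Lemma comps_equiv_trans l1 l2 l3 : comps_equiv l1 l2 -> comps_equiv l2 l3 -> comps_equiv l1 l3.
Proof.
  intros [a [H1 H2]] [b [H3 H4]]. apply Forall2_comp_eq_sym in H2.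
  destruct (Permutation_Forall2 H3 H2) as [c [H5 H6]].
  exists c; split; [eapply Permutation_trans; eauto|].
  eapply Forall2_comp_eq_trans; eauto. apply Forall2_comp_eq_sym; auto.
Qed.

Lemma comps_equiv_app a b c d :
  comps_equiv a b -> comps_equiv c d -> comps_equiv (a ++ c) (b ++ d).
Proof.
  intros [a2 [H1 H2]] [c2 [H3 H4]]. exists (a2 ++ c2).
  split; [apply Permutation_app | apply Forall2_app]; auto.
Qed.

Lemma comps_equiv_map f l l' : Injective f ->
  comps_equiv l l' -> comps_equiv (map (ren f) l) (map (ren f) l').
Proof.
  intros Hf [l2 [H1 H2]]. exists (map (ren f) l2). split; [apply Permutation_map; auto|].
  clear H1. induction H2; simpl; constructor; auto using comp_eq_ren.
Qed.

Lemma comps_equiv_par_list l l' : comps_equiv l l' -> scong (par_list l) (par_list l').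
Proof.
  intros [l2 [H1 H2]]. rewrite (par_list_perm _ _ H1). apply Forall2_comp_eq_par_list; auto.
Qed.

Lemma comps_equiv_in_l l l' P : comps_equiv l l' -> In P l -> exists P', In P' l' /\ comp_eq P P'.
Proof.
  intros [l2 [H1 H2]] HP. apply (Forall2_comp_eq_in_l _ _ _ H2).
  eapply Permutation_in; eauto.
Qed.

Lemma comps_equiv_in_r l l' P' : comps_equiv l l' -> In P' l' -> exists P, In P l /\ comp_eq P P'.
Proof.
  intros [l2 [H1 H2]] HP'. destruct (Forall2_comp_eq_in_r _ _ _ H2 HP') as [P [HP E]].
  exists P; split; auto. eapply Permutation_in; [apply Permutation_sym|]; eauto.
Qed.

Lemma comps_equiv_app_r l lo rr : comps_equiv l (lo ++ rr) ->
  exists lo' rr', Permutation l (lo' ++ rr') /\ Forall2 comp_eq lo' lo /\ comps_equiv rr' rr.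
Proof.
  intros [l2 [H1 H2]]. apply Forall2_app_inv_r in H2. destruct H2 as [a [b [H3 [H4 ->]]]].
  exists a, b. auto using comps_equiv_Forall2.
Qed.

Lemma map_ren_comp f g l : map (ren f) (map (ren g) l) = map (ren (fun x => f (g x))) l.
Proof. rewrite map_map. apply map_ext. intros; apply ren_comp. Qed.

Lemma map_ren_id_on f l : (forall x, f x = x) -> map (ren f) l = l.
Proof. intros H. rewrite <- (map_id l) at 2. apply map_ext. intros. apply ren_id_on; auto. Qed.

(* Normal forms agree up to a permutation of the bound names [s, s+k). *)
Definition block_equiv (s k : nat) (l l' : list proc) : Prop :=
  exists p q, block_bij s k p q /\ comps_equiv (map (ren p) l) l'.

Lemma block_equiv_refl s k l : block_equiv s k l l.
Proof.
  exists id, id. split; [apply block_bij_id|]. rewrite map_ren_id_on by auto.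
  apply comps_equiv_refl.
Qed.

Lemma block_equiv_sym s k l l' : block_equiv s k l l' -> block_equiv s k l' l.
Proof.
  intros [p [q [Hpq H]]]. exists q, p. split; [apply block_bij_inv; auto|].
  apply comps_equiv_sym. apply (comps_equiv_map q) in H;
    [| apply block_bij_injective with s k p; apply block_bij_inv; auto].
  rewrite map_ren_comp, map_ren_id_on in H by apply (bij_qp _ _ _ _ Hpq). auto.
Qed.

Lemma block_equiv_trans s k a b c :
  block_equiv s k a b -> block_equiv s k b c -> block_equiv s k a c.
Proof.
  intros [p [q [Hpq H]]] [p' [q' [Hpq' H']]].
  exists (fun x => p' (p x)), (fun x => q (q' x)). split; [apply block_bij_comp; auto|].
  rewrite <- map_ren_comp. eapply comps_equiv_trans; [|apply H'].
  apply comps_equiv_map; auto. eapply block_bij_injective; eauto.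
Qed.

Lemma block_equiv_widen s k l l' : block_equiv (S s) k l l' -> block_equiv s (S k) l l'.
Proof.
  intros [p [q [Hpq H]]]. exists p, q. split; auto.
  eapply block_bij_widen; eauto; lia.
Qed.

Lemma block_bij_app s k1 k2 p q p' q' :
  block_bij s k1 p q -> block_bij (s + k1) k2 p' q' ->
  block_bij s (k1 + k2) (fun x => if x <? s + k1 then p x else p' x)
                        (fun x => if x <? s + k1 then q x else q' x).
Proof.
  intros Hpq Hpq'.
  assert (Bp := block_bij_in _ _ _ _ Hpq). assert (Bq := block_bij_in _ _ _ _ (block_bij_inv _ _ _ _ Hpq)).
  assert (Bp' := block_bij_in _ _ _ _ Hpq'). assert (Bq' := block_bij_in _ _ _ _ (block_bij_inv _ _ _ _ Hpq')).
  destruct Hpq as [H1 H2 H3], Hpq' as [G1 G2 G3].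
  assert (Hq3 := bij_out _ _ _ _ (block_bij_inv _ _ _ _ (Build_block_bij _ _ _ _ H1 H2 H3))).
  assert (Gq3 := bij_out _ _ _ _ (block_bij_inv _ _ _ _ (Build_block_bij _ _ _ _ G1 G2 G3))).
  split.
  - intros x. destruct (Nat.ltb_spec x (s + k1)).
    + destruct (Nat.lt_ge_cases x s).
      * rewrite H3 by lia. destruct (Nat.ltb_spec x (s + k1)); [|lia]. rewrite Hq3 by lia; auto.
      * specialize (Bp x ltac:(lia)). destruct (Nat.ltb_spec (p x) (s + k1)); [auto|lia].
    + destruct (Nat.lt_ge_cases x (s + k1 + k2)).
      * specialize (Bp' x ltac:(lia)). destruct (Nat.ltb_spec (p' x) (s + k1)); [lia|auto].
      * rewrite G3 by lia. destruct (Nat.ltb_spec x (s + k1)); [lia|]. rewrite Gq3 by lia; auto.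
  - intros x. destruct (Nat.ltb_spec x (s + k1)).
    + destruct (Nat.lt_ge_cases x s).
      * rewrite Hq3 by lia. destruct (Nat.ltb_spec x (s + k1)); [|lia]. rewrite H3 by lia; auto.
      * specialize (Bq x ltac:(lia)). destruct (Nat.ltb_spec (q x) (s + k1)); [auto|lia].
    + destruct (Nat.lt_ge_cases x (s + k1 + k2)).
      * specialize (Bq' x ltac:(lia)). destruct (Nat.ltb_spec (q' x) (s + k1)); [lia|auto].
      * rewrite Gq3 by lia. destruct (Nat.ltb_spec x (s + k1)); [lia|]. rewrite G3 by lia; auto.
  - intros x Hx. destruct (Nat.ltb_spec x (s + k1)); [apply H3 | apply G3]; lia.
Qed.

Lemma block_equiv_app s k1 k2 l1 l1' l2 l2' :
  block_equiv s k1 l1 l1' -> block_equiv (s + k1) k2 l2 l2' ->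
  (forall P x, In P l1 -> In x (names P) -> x < s + k1) ->
  (forall P x, In P l2 -> In x (names P) -> x < s \/ s + k1 <= x) ->
  block_equiv s (k1 + k2) (l1 ++ l2) (l1' ++ l2').
Proof.
  intros [p [q [Hpq H]]] [p' [q' [Hpq' H']]] N1 N2.
  eexists _, _. split; [apply (block_bij_app _ _ _ _ _ _ _ Hpq Hpq')|].
  rewrite map_app. apply comps_equiv_app.
  - erewrite map_ext_in; [apply H|]. intros P HP. apply ren_ext. intros x Hx.
    specialize (N1 P x HP Hx). destruct (Nat.ltb_spec x (s + k1)); lia.
  - erewrite map_ext_in; [apply H'|]. intros P HP. apply ren_ext. intros x Hx.
    specialize (N2 P x HP Hx). destruct (Nat.ltb_spec x (s + k1)); [|reflexivity].
    rewrite (bij_out _ _ _ _ Hpq), (bij_out _ _ _ _ Hpq'); lia.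
Qed.

Lemma block_equiv_Amb s k a l l' : block_equiv s k l l' -> a < s ->
  block_equiv s k [Amb a (par_list l)] [Amb a (par_list l')].
Proof.
  intros [p [q [Hpq H]]] Ha. exists p, q. split; auto.
  simpl. rewrite (bij_out _ _ _ _ Hpq) by lia. apply comps_equiv_Forall2.
  constructor; [|constructor]. split; auto.
  rewrite ren_par_list. apply comps_equiv_par_list; auto.
Qed.

Lemma block_equiv_Act s k M l l' : block_equiv s k l l' -> (forall x, In x (fn_cap M) -> x < s) ->
  block_equiv s k [Act M (par_list l)] [Act M (par_list l')].
Proof.
  intros [p [q [Hpq H]]] HM. exists p, q. split; auto.
  apply comps_equiv_Forall2. constructor; [|constructor]. split.
  - rewrite <- (ren_cap_id M) at 2. apply ren_cap_ext. intros x Hx.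
    apply (bij_out _ _ _ _ Hpq). left. auto.
  - rewrite ren_par_list. apply comps_equiv_par_list; auto.
Qed.

(* Exchanges the adjacent blocks [s, s+a) and [s+a, s+a+b). *)
Definition rot (s a b x : nat) : nat :=
  if x <? s then x else if x <? s + a then x + b else if x <? s + a + b then x - a else x.

Ltac ltb_cases := repeat match goal with |- context [?a <? ?b] => destruct (Nat.ltb_spec a b) end.

Lemma rot_involutive s a b x : rot s a b (rot s b a x) = x.
Proof. unfold rot. ltb_cases; lia. Qed.

Lemma block_bij_rot s a b : block_bij s (a + b) (rot s a b) (rot s b a).
Proof. split; intros; try apply rot_involutive. unfold rot. ltb_cases; lia. Qed.

Lemma comps_par_comm r s P Q : (forall x, In x (fn (Par P Q)) -> r x < s) ->
  block_equiv s (nu_count P + nu_count Q) (comps r s (Par P Q)) (comps r s (Par Q P)).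
Proof.
  intros Hr. exists (rot s (nu_count P) (nu_count Q)), (rot s (nu_count Q) (nu_count P)).
  split; [apply block_bij_rot|]. simpl.
  assert (HP : forall x, In x (fn P) -> r x < s) by (intros; apply Hr, in_or_app; auto).
  assert (HQ : forall x, In x (fn Q) -> r x < s) by (intros; apply Hr, in_or_app; auto).
  rewrite map_app, (ren_comps P _ r r s (s + nu_count Q)), (ren_comps Q _ r r (s + nu_count P) s).
  - apply comps_equiv_perm, Permutation_app_comm.
  - intros x Hx. specialize (HQ x Hx). unfold rot. ltb_cases; lia.
  - intros t Ht. unfold rot. ltb_cases; lia.
  - intros x Hx. specialize (HP x Hx). unfold rot. ltb_cases; lia.
  - intros t Ht. unfold rot. ltb_cases; lia.
Qed.

Lemma comps_nu_nu r s n m P : (forall x, In x (fn (Nu n (Nu m P))) -> r x < s) ->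
  block_equiv s (S (S (nu_count P))) (comps r s (Nu n (Nu m P))) (comps r s (Nu m (Nu n P))).
Proof.
  intros Hr. simpl. destruct (Nat.eq_dec n m) as [-> | Hnm].
  - replace (comps _ _ P) with (comps (fupd (fupd r m s) m (S s)) (S (S s)) P);
      [apply block_equiv_refl|].
    apply comps_ext. intros x _. unfold fupd. destruct (Nat.eqb_spec x m); auto.
  - exists (swapn s (S s)), (swapn s (S s)). split.
    + split; intros; [apply swapn_involutive | apply swapn_involutive | apply swapn_other; lia].
    + rewrite (ren_comps P _ _ (fupd (fupd r m s) n (S s)) (S (S s)) (S (S s))).
      * apply comps_equiv_refl.
      * intros x Hx. unfold fupd.
        destruct (Nat.eqb_spec x m), (Nat.eqb_spec x n); subst; try congruence.
        -- apply swapn_r.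
        -- apply swapn_l.
        -- assert (r x < s) by (apply Hr; simpl; rewrite !in_remove_iff; auto).
           apply swapn_other; lia.
      * intros t Ht. rewrite swapn_other; lia.
Qed.

Lemma comps_nu_par r s n P Q : ~ In n (fn P) -> (forall x, In x (fn (Nu n (Par P Q))) -> r x < s) ->
  block_equiv s (S (nu_count P + nu_count Q))
    (comps r s (Nu n (Par P Q))) (comps r s (Par P (Nu n Q))).
Proof.
  intros Hn Hr. simpl. exists (rot s 1 (nu_count P)), (rot s (nu_count P) 1).
  split; [apply (block_bij_widen _ _ _ _ _ _ (block_bij_rot s 1 (nu_count P))); lia|].
  rewrite map_app, (ren_comps P _ _ r (S s) s),
    (ren_comps Q _ _ (fupd r n (s + nu_count P)) (S s + nu_count P) (S (s + nu_count P))).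
  - apply comps_equiv_refl.
  - intros x Hx. unfold fupd. destruct (Nat.eqb_spec x n).
    + unfold rot. ltb_cases; lia.
    + assert (r x < s) by (apply Hr; simpl; apply in_remove_iff; rewrite in_app_iff; auto).
      unfold rot. ltb_cases; lia.
  - intros t Ht. unfold rot. ltb_cases; lia.
  - intros x Hx. rewrite fupd_neq by (intros ->; auto).
    assert (r x < s)
      by (apply Hr; simpl; apply in_remove_iff; rewrite in_app_iff; split; auto; intros ->; auto).
    unfold rot. ltb_cases; lia.
  - intros t Ht. unfold rot. ltb_cases; lia.
Qed.

Lemma comps_alpha r s n m P : ~ In m (fn (Nu n P)) ->
  comps r s (Nu n P) = comps r s (Nu m (swap n m P)).
Proof.
  intros Hm. simpl. rewrite comps_swap. apply comps_ext. intros x Hx. unfold fupd.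
  destruct (Nat.eqb_spec x n) as [-> | Hxn]; [rewrite swapn_l, Nat.eqb_refl; auto|].
  assert (x <> m) by (intros ->; apply Hm; simpl; apply in_remove_iff; auto).
  rewrite swapn_other by auto. destruct (Nat.eqb_spec x m); congruence.
Qed.

Theorem scong_block_equiv P Q : scong P Q -> forall r s, (forall x, In x (fn P) -> r x < s) ->
  block_equiv s (nu_count P) (comps r s P) (comps r s Q).
Proof.
  induction 1; intros r s Hr.
  - apply block_equiv_refl.
  - apply block_equiv_sym. rewrite <- (nu_count_scong _ _ H).
    apply IHscong. intros x Hx; apply Hr, (fn_scong _ _ H); auto.
  - eapply block_equiv_trans; [eauto|]. rewrite (nu_count_scong _ _ H).
    apply IHscong2. intros x Hx; apply Hr, (fn_scong _ _ H); auto.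
  - apply block_equiv_Amb; [|apply Hr; simpl; auto].
    apply IHscong. intros; apply Hr; simpl; auto.
  - apply block_equiv_Act.
    + apply IHscong. intros; apply Hr; simpl; apply in_or_app; auto.
    + intros x Hx. rewrite fn_cap_ren in Hx. destruct Hx as [y [-> Hy]].
      apply Hr; simpl; apply in_or_app; auto.
  - apply block_equiv_widen. apply IHscong. intros x Hx. unfold fupd.
    destruct (Nat.eqb_spec x n); [lia|].
    assert (r x < s) by (apply Hr; simpl; apply in_remove_iff; auto). lia.
  - simpl. rewrite (nu_count_scong _ _ H). apply block_equiv_app.
    + rewrite <- (nu_count_scong _ _ H). apply IHscong1.
      intros; apply Hr; simpl; apply in_or_app; auto.
    + apply IHscong2. intros x Hx.
      assert (r x < s) by (apply Hr; simpl; apply in_or_app; auto). lia.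
    + intros a x Ha Hx. rewrite <- (nu_count_scong _ _ H).
      destruct (names_in_comps _ _ _ _ _ Ha Hx) as [[y [Hy ->]] | Hx']; [|lia].
      assert (r y < s) by (apply Hr; simpl; apply in_or_app; auto). lia.
    + intros a x Ha Hx. destruct (names_in_comps _ _ _ _ _ Ha Hx) as [[y [Hy ->]] | Hx'].
      * left. apply Hr; simpl; apply in_or_app; auto.
      * right; lia.
  - apply comps_par_comm; auto.
  - simpl. rewrite <- app_assoc, Nat.add_assoc. apply block_equiv_refl.
  - simpl. rewrite app_nil_r, Nat.add_0_r. apply block_equiv_refl.
  - apply comps_nu_nu; auto.
  - apply comps_nu_par; auto.
  - simpl. rewrite fupd_neq by auto. apply block_equiv_refl.
  - simpl. rewrite (ren_cap_ext (fupd r n s) r); [apply block_equiv_refl|].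
    intros x Hx. apply fupd_neq. intros ->; auto.
  - rewrite <- (comps_alpha r s n m P) by auto. apply block_equiv_refl.
Qed.

(** * Reduction on normal forms *)

(* The components [lo] consumed by a reduction and the components [ln] it produces. *)
Inductive local_step : list proc -> list proc -> Prop :=
| ls_amb a B B' : local_step [Amb a B] [Amb a B']
| ls_in a b B1 l B2 B3 :
    local_step [Amb a (par_list (Act (In_ b) B1 :: l)); Amb b B2] [Amb b B3]
| ls_out b a B l ln : local_step [Amb b (par_list (Amb a B :: l))] ln
| ls_open c l1 l2 : local_step [Act (Open_ c) (par_list l1); Amb c (par_list l2)] (l1 ++ l2).

Lemma local_step_ren f lo ln : local_step lo ln -> local_step (map (ren f) lo) (map (ren f) ln).
Proof.
  destruct 1; simpl; rewrite ?ren_par_list, ?map_app; simpl; constructor.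
Qed.

(* A reduction [U ~> V] replaces, up to a permutation of the bound names, the
   components [lo] of [U] by [ln], leaving the rest [rr] untouched. *)
Definition red_decomp (U V : proc) (r : name -> name) (s : nat) : Prop :=
  exists p q lo ln rr, block_bij s (nu_count U) p q /\
    comps_equiv (map (ren p) (comps r s U)) (lo ++ rr) /\
    comps_equiv (comps r s V) (ln ++ rr) /\
    (forall x, x < s -> In x (fn (par_list ln)) -> In x (fn (par_list lo))) /\
    local_step lo ln.

Lemma red_decomp_local U V r s : local_step (comps r s U) (comps r s V) ->
  (forall x, x < s -> In x (fn (par_list (comps r s V))) -> In x (fn (par_list (comps r s U)))) ->
  red_decomp U V r s.
Proof.
  intros HK Hf. exists id, id, (comps r s U), (comps r s V), [].
  rewrite map_ren_id_on, !app_nil_r by auto.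
  repeat split; auto using comps_equiv_refl.
Qed.

Lemma fn_par_list_app l1 l2 x :
  In x (fn (par_list (l1 ++ l2))) <-> In x (fn (par_list l1)) \/ In x (fn (par_list l2)).
Proof. rewrite (fn_scong _ _ (par_list_app l1 l2)). simpl. apply in_app_iff. Qed.

Lemma red_decomp_nu U V r s n : red_decomp U V (fupd r n s) (S s) -> red_decomp (Nu n U) (Nu n V) r s.
Proof.
  intros [p [q [lo [ln [rr [Hpq [HU [HV [Hfn Hstep]]]]]]]]].
  exists p, q, lo, ln, rr. simpl. split; [eapply block_bij_widen; eauto; lia|].
  repeat split; auto.
Qed.

Lemma red_decomp_par U V R r s : red U V -> red_decomp U V r s ->
  (forall x, In x (fn R) -> r x < s) -> red_decomp (Par U R) (Par V R) r s.
Proof.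
  intros Hr [p [q [lo [ln [rr [Hpq [HU [HV [Hfn Hstep]]]]]]]]] HR.
  exists p, q, lo, ln, (rr ++ comps r (s + nu_count U) R). simpl.
  rewrite (nu_count_red _ _ Hr).
  assert (ER : map (ren p) (comps r (s + nu_count U) R) = comps r (s + nu_count U) R).
  { rewrite <- (map_id (comps r (s + nu_count U) R)) at 2. apply map_ext_in. intros a Ha.
    rewrite <- (ren_id a) at 2. apply ren_ext. intros x Hx.
    apply (bij_out _ _ _ _ Hpq).
    destruct (names_in_comps _ _ _ _ _ Ha Hx) as [[y [Hy ->]] | Hx']; [left; auto | right; lia]. }
  split; [eapply block_bij_widen; eauto; lia|]. repeat split; auto.
  - rewrite map_app, ER, app_assoc. apply comps_equiv_app; auto using comps_equiv_refl.
  - rewrite app_assoc. apply comps_equiv_app; auto using comps_equiv_refl.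
Qed.

Lemma red_decomp_scong U U0 V0 V r s : scong U U0 -> red U0 V0 -> scong V0 V ->
  (forall x, In x (fn U) -> r x < s) -> red_decomp U0 V0 r s -> red_decomp U V r s.
Proof.
  intros HU Hr HV Hs [p [q [lo [ln [rr [Hpq [H0 [H1 [Hfn Hstep]]]]]]]]].
  assert (Hs0 : forall x, In x (fn U0) -> r x < s) by (intros x Hx; apply Hs, (fn_scong _ _ HU); auto).
  assert (Hs1 : forall x, In x (fn V0) -> r x < s) by (intros x Hx; apply Hs0; eapply fn_red; eauto).
  destruct (scong_block_equiv _ _ HU r s Hs) as [p1 [q1 [Hpq1 K]]].
  destruct (scong_block_equiv _ _ HV r s Hs1) as [p2 [q2 [Hpq2 L]]].
  assert (E0 : nu_count U0 = nu_count U) by (symmetry; apply nu_count_scong; auto).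
  assert (E1 : nu_count V0 = nu_count U) by (rewrite (nu_count_red _ _ Hr); auto).
  rewrite E0 in Hpq. rewrite E1 in Hpq2.
  assert (Ip2 : Injective p2) by (eapply block_bij_injective; eauto).
  exists (fun x => p2 (p (p1 x))), (fun x => q1 (q (q2 x))),
    (map (ren p2) lo), (map (ren p2) ln), (map (ren p2) rr).
  split; [apply (block_bij_comp _ _ _ _ _ _ (block_bij_comp _ _ _ _ _ _ Hpq1 Hpq) Hpq2)|].
  repeat split.
  - rewrite <- (map_ren_comp p2 (fun x => p (p1 x))), <- (map_ren_comp p p1), <- map_app.
    apply comps_equiv_map; auto.
    eapply comps_equiv_trans; [|apply H0]. apply comps_equiv_map; auto.
    eapply block_bij_injective; eauto.
  - rewrite <- map_app. eapply comps_equiv_trans; [apply comps_equiv_sym, L|].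
    apply comps_equiv_map; auto.
  - intros x Hx Hin. rewrite <- ren_par_list in Hin |- *.
    apply fn_ren in Hin; auto. destruct Hin as [y [-> Hy]].
    assert (Ey : y = p2 y) by (apply (block_bij_fixed _ _ _ _ Hpq2); auto).
    rewrite <- Ey in *. apply fn_ren; auto. exists y; split; auto.
  - apply local_step_ren; auto.
Qed.

Theorem red_comps U V : red U V -> forall r s, (forall x, In x (fn U) -> r x < s) ->
  red_decomp U V r s.
Proof.
  induction 1 as [n m P Q R|n m P Q R|n P Q|n P Q Hr IH|n P Q Hr IH|P Q R Hr IH|P P0 Q0 Q H1 Hr IH H2];
    intros r s Hs.
  - apply red_decomp_local; [apply ls_in|].
    intros x _. simpl. rewrite !in_app_iff, !fn_par_list_app. simpl. rewrite !in_app_iff. tauto.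
  - apply red_decomp_local; [apply ls_out|].
    intros x _. simpl. rewrite !in_app_iff, !fn_par_list_app. simpl. rewrite !in_app_iff. tauto.
  - apply red_decomp_local; [apply ls_open|].
    intros x _. simpl. rewrite !in_app_iff, !fn_par_list_app. simpl. rewrite !in_app_iff. tauto.
  - apply red_decomp_nu, IH. intros x Hx. unfold fupd. destruct (Nat.eqb_spec x n); [lia|].
    assert (r x < s) by (apply Hs; simpl; apply in_remove_iff; auto). lia.
  - apply red_decomp_local; [apply ls_amb|].
    intros x Hxs. simpl. rewrite !in_app_iff. intros [H | [H | []]]; auto. right; left.
    apply fn_comps in H. destruct H as [[y [Hy ->]] | Hx]; [|lia].
    apply fn_in_comps. eapply fn_red; eauto.
  - apply red_decomp_par; auto. apply IH. all: intros; apply Hs; simpl; apply in_or_app; auto.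
  - eapply red_decomp_scong; eauto. apply IH.
    intros x Hx. apply Hs, (fn_scong _ _ H1); auto.
Qed.

Lemma red_comps_split U V s : red U V -> (forall x, In x (fn U) -> x < s) ->
  exists p q lo' lo ln rr, block_bij s (nu_count U) p q /\
    Permutation (map (ren p) (comps id s U)) (lo' ++ rr) /\ Forall2 comp_eq lo' lo /\
    local_step lo ln /\ comps_equiv (comps id s V) (ln ++ rr) /\
    (forall x, x < s -> In x (fn (par_list ln)) -> In x (fn (par_list lo'))).
Proof.
  intros Hr Hs.
  destruct (red_comps _ _ Hr id s Hs) as [p [q [lo [ln [rr [Hpq [HU [HV [Hfn Hstep]]]]]]]]].
  destruct (comps_equiv_app_r _ _ _ HU) as [lo' [rr' [Hperm [Hlo Hrr]]]].
  exists p, q, lo', lo, ln, rr'. do 4 (split; auto). split.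
  - eapply comps_equiv_trans; [exact HV|].
    apply comps_equiv_app; [apply comps_equiv_refl | apply comps_equiv_sym; auto].
  - intros x Hx Hin. apply (fn_scong _ _ (Forall2_comp_eq_par_list _ _ Hlo)). auto.
Qed.

Lemma barb_comps V m s : barb V m -> m < s -> (forall x, In x (fn V) -> x < s) ->
  exists B, In (Amb m B) (comps id s V).
Proof.
  intros [A [Q [R [H Hm]]]] Hms Hs.
  destruct (scong_block_equiv _ _ H id s Hs) as [p [q [Hpq K]]].
  rewrite comps_nus in K. simpl in K. rewrite fupd_list_notin in K by auto.
  destruct (comps_equiv_in_r _ _ _ K (or_introl eq_refl)) as [P [HP E]].
  apply in_map_iff in HP. destruct HP as [P0 [<- HP0]].
  destruct P0; simpl in E; try discriminate. destruct E as [E _].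
  apply (block_bij_fixed _ _ _ _ Hpq) in E; [subst; eauto | auto].
Qed.

Lemma comps_barb V m B s : In (Amb m B) (comps id s V) -> m < s ->
  (forall x, In x (fn V) -> x < s) -> barb V m.
Proof.
  intros H Hm Hs. apply in_split in H. destruct H as [l1 [l2 E]].
  exists (seq s (nu_count V)), B, (par_list (l1 ++ l2)). split.
  - etransitivity; [apply (scong_normal_form V s Hs)|]. rewrite E.
    rewrite (par_list_perm _ _ (Permutation_sym (Permutation_middle l1 l2 (Amb m B)))).
    reflexivity.
  - rewrite in_seq. lia.
Qed.

Lemma comps_equiv_barb V L m B s : comps_equiv (comps id s V) L -> In (Amb m B) L ->
  m < s -> (forall x, In x (fn V) -> x < s) -> barb V m.
Proof.
  intros HV HB Hm Hs. destruct (comps_equiv_in_r _ _ _ HV HB) as [P [HP E]].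
  apply comp_eq_Amb_r in E. destruct E as [B' [-> _]]. eapply comps_barb; eauto.
Qed.

Lemma barb_red_source V lo' ln rr m s :
  comps_equiv (comps id s V) (ln ++ rr) ->
  (forall x, x < s -> In x (fn (par_list ln)) -> In x (fn (par_list lo'))) ->
  barb V m -> m < s -> (forall x, In x (fn V) -> x < s) ->
  In m (fn (par_list lo')) \/ exists B, In (Amb m B) rr.
Proof.
  intros HV Hfn Hb Hm Hs. destruct (barb_comps _ _ _ Hb Hm Hs) as [B HB].
  destruct (comps_equiv_in_l _ _ _ HV HB) as [P [HP E]].
  apply comp_eq_Amb_l in E. destruct E as [B' [-> _]].
  apply in_app_or in HP. destruct HP as [HP | HP]; [left | right; eauto].
  apply Hfn; auto. apply fn_par_list. exists (Amb m B'). simpl. auto.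
Qed.

Lemma scong_Zero_comps P : scong Zero P -> comps id 0 P = [].
Proof.
  intros H. destruct (scong_block_equiv _ _ H id 0 (fun x (Hx : In x (fn Zero)) => match Hx with end))
    as [p [q [_ [l2 [Hperm H2]]]]].
  simpl in Hperm. apply Permutation_nil in Hperm. subst. inversion H2; auto.
Qed.

(** * The two opening steps *)

Lemma Forall2_comp_eq_one l P : Forall2 comp_eq l [P] -> exists P', l = [P'] /\ comp_eq P' P.
Proof. intros H. inversion H as [|P' ? ? ? E H']; subst. inversion H'; subst. eauto. Qed.

Lemma Forall2_comp_eq_two l P Q : Forall2 comp_eq l [P; Q] ->
  exists P' Q', l = [P'; Q'] /\ comp_eq P' P /\ comp_eq Q' Q.
Proof.
  intros H. inversion H as [|P' ? ? ? E H']; subst.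
  inversion H' as [|Q' ? ? ? E' H'']; subst. inversion H''; subst. eauto 6.
Qed.

Lemma local_step_Act lo lo' ln M B : local_step lo ln -> Forall2 comp_eq lo' lo ->
  In (Act M B) lo' -> exists c B2 l1 l2, M = Open_ c /\ lo' = [Act M B; Amb c B2] /\
    scong B (par_list l1) /\ scong B2 (par_list l2) /\ ln = l1 ++ l2.
Proof.
  intros Hstep Hlo HM. destruct Hstep.
  - apply Forall2_comp_eq_one in Hlo. destruct Hlo as [P' [-> E]].
    destruct HM as [-> | []]. unfold comp_eq in E. discriminate.
  - apply Forall2_comp_eq_two in Hlo. destruct Hlo as [P' [Q' [-> [E1 E2]]]].
    destruct HM as [-> | [-> | []]]; unfold comp_eq in *; discriminate.
  - apply Forall2_comp_eq_one in Hlo. destruct Hlo as [P' [-> E]].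
    destruct HM as [-> | []]. unfold comp_eq in E. discriminate.
  - apply Forall2_comp_eq_two in Hlo. destruct Hlo as [P' [Q' [-> [E1 E2]]]].
    destruct HM as [-> | [-> | []]]; [|unfold comp_eq in E2; discriminate].
    destruct E1 as [-> E1]. apply comp_eq_Amb_r in E2. destruct E2 as [B2 [-> E2]]. eauto 10.
Qed.

Lemma local_step_Amb_Zero lo lo' ln m : local_step lo ln -> Forall2 comp_eq lo' lo ->
  In (Amb m Zero) lo' -> (forall B, ~ In (Amb m B) ln) ->
  exists B1 l1 l2, lo' = [Act (Open_ m) B1; Amb m Zero] /\
    scong B1 (par_list l1) /\ scong Zero (par_list l2) /\ ln = l1 ++ l2.
Proof.
  intros Hstep Hlo Hm Hln. destruct Hstep.
  - apply Forall2_comp_eq_one in Hlo. destruct Hlo as [P' [-> E]].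
    destruct Hm as [-> | []]. destruct E as [-> _]. exfalso. apply (Hln B'). simpl. auto.
  - apply Forall2_comp_eq_two in Hlo. destruct Hlo as [P' [Q' [-> [E1 E2]]]].
    destruct Hm as [-> | [-> | []]]; exfalso.
    + destruct E1 as [_ E1]. apply scong_Zero_comps in E1. discriminate.
    + destruct E2 as [-> _]. apply (Hln B3). simpl. auto.
  - apply Forall2_comp_eq_one in Hlo. destruct Hlo as [P' [-> E]].
    destruct Hm as [-> | []]. destruct E as [_ E]. apply scong_Zero_comps in E. discriminate.
  - apply Forall2_comp_eq_two in Hlo. destruct Hlo as [P' [Q' [-> [E1 E2]]]].
    destruct Hm as [-> | [-> | []]]; [unfold comp_eq in E1; discriminate|].
    destruct E2 as [-> E2]. apply comp_eq_Act_r in E1. destruct E1 as [B1 [-> E1]]. eauto 10.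
Qed.

Lemma scong_comps_equiv V s L : (forall x, In x (fn V) -> x < s) ->
  comps_equiv (comps id s V) L -> scong V (nus (seq s (nu_count V)) (par_list L)).
Proof.
  intros Hs HV. etransitivity; [apply (scong_normal_form V s Hs)|].
  rewrite (comps_equiv_par_list _ _ HV). reflexivity.
Qed.

Lemma not_in_fn_comps t P e m : ~ In m (fn P) -> m < t -> In e (comps id t P) -> ~ In m (fn e).
Proof.
  intros Hm Hmt He Hme.
  destruct (fn_comps_id t P m) as [H | H]; [apply fn_par_list; eauto | auto | lia].
Qed.

Lemma not_in_fn_ren s k p q e m : block_bij s k p q -> m < s -> ~ In m (fn e) ->
  ~ In m (fn (ren p e)).
Proof.
  intros Hpq Hm He Hme. apply fn_ren in Hme; [|eapply block_bij_injective; eauto].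
  destruct Hme as [y [Ey Hy]]. symmetry in Ey.
  apply (block_bij_fixed _ _ _ _ Hpq) in Ey; subst; auto.
Qed.

Lemma red_consumes_marked L a lo' rr ln V m s :
  Permutation (L ++ [a]) (lo' ++ rr) -> (forall e, In e L -> ~ In m (fn e)) ->
  (forall B, a <> Amb m B) -> comps_equiv (comps id s V) (ln ++ rr) ->
  (forall x, x < s -> In x (fn (par_list ln)) -> In x (fn (par_list lo'))) ->
  barb V m -> m < s -> (forall x, In x (fn V) -> x < s) -> In a lo'.
Proof.
  intros Hperm HL Ha HV Hfn Hb Hm Hs.
  assert (Hin : forall e, In e (lo' ++ rr) -> In e L \/ e = a).
  { intros e He. apply (Permutation_in _ (Permutation_sym Hperm)), in_app_or in He.
    destruct He as [He | [<- | []]]; auto. }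
  destruct (barb_red_source _ _ _ _ _ _ HV Hfn Hb Hm Hs) as [Hlo | [B HB]].
  - apply fn_par_list in Hlo. destruct Hlo as [e [He Hme]].
    destruct (Hin e) as [HeL | ->]; [apply in_or_app; auto | exfalso; eapply HL; eauto | auto].
  - exfalso. destruct (Hin (Amb m B)) as [HeL | E]; [apply in_or_app; auto | |].
    + apply (HL _ HeL). simpl. auto.
    + apply (Ha B). auto.
Qed.

Lemma red_consumes_ambient L lo' rr ln V m B s :
  Permutation L (lo' ++ rr) -> In (Amb m B) L -> comps_equiv (comps id s V) (ln ++ rr) ->
  ~ barb V m -> m < s -> (forall x, In x (fn V) -> x < s) -> In (Amb m B) lo'.
Proof.
  intros Hperm HB HV Hb Hm Hs.
  apply (Permutation_in _ Hperm), in_app_or in HB. destruct HB as [HB | HB]; auto.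
  exfalso. apply Hb. apply (comps_equiv_barb _ _ m B s HV); auto. apply in_or_app; auto.
Qed.

Lemma comps_opener t m T Z :
  comps id t (Par (par_list [Amb m Zero; Act (Open_ m) T]) Z) =
  Amb m Zero :: Act (Open_ m) (par_list (comps id t T)) :: comps id (t + nu_count T) Z.
Proof. simpl. rewrite !Nat.add_0_r. reflexivity. Qed.

Lemma open_m_step m T Z Y s k :
  nu_count T = 0 -> nu_count Z = 0 -> ~ In m (fn Z) -> m < s ->
  (forall x, In x (fn (nus (seq s k) (Par (par_list [Amb m Zero; Act (Open_ m) T]) Z))) -> x < s) ->
  red (nus (seq s k) (Par (par_list [Amb m Zero; Act (Open_ m) T]) Z)) Y -> ~ barb Y m ->
  scong Y (nus (seq s k) (Par T Z)).
Proof.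
  intros HT HZ HmZ Hm Hs Hr Hb.
  assert (HsY : forall x, In x (fn Y) -> x < s) by (intros x Hx; apply Hs; eapply fn_red; eauto).
  assert (Hk : nu_count (nus (seq s k) (Par (par_list [Amb m Zero; Act (Open_ m) T]) Z)) = k)
    by (rewrite nu_count_nus, length_seq; simpl; lia).
  destruct (red_comps_split _ _ s Hr Hs)
    as [p [q [lo' [lo [ln [rr [Hpq [Hperm [Hlo [Hstep [HY Hfn]]]]]]]]]]].
  rewrite Hk in Hpq. rewrite comps_nus_seq, comps_opener, HT, Nat.add_0_r in Hperm.
  cbn [map ren ren_cap] in Hperm. rewrite (bij_out _ _ _ _ Hpq m) in Hperm by lia.
  set (T' := par_list (comps id (s + k) T)) in *. set (Zs := comps id (s + k) Z) in *.
  assert (HmZs : forall e, In e Zs -> ~ In m (fn (ren p e))).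
  { intros e He. apply (not_in_fn_ren _ _ _ _ _ _ Hpq Hm), (not_in_fn_comps (s + k) Z); auto; lia. }
  assert (Hln : forall B, ~ In (Amb m B) ln).
  { intros B HB. apply Hb, (comps_equiv_barb _ _ m B s HY); auto. apply in_or_app; auto. }
  assert (Hlo' : In (Amb m Zero) lo') by (eapply red_consumes_ambient; eauto; simpl; auto).
  destruct (local_step_Amb_Zero _ _ _ _ Hstep Hlo Hlo' Hln) as [B1 [l1 [l2 [-> [HB1 [Hl2 ->]]]]]].
  assert (EB1 : B1 = ren p T').
  { assert (Hin : In (Act (Open_ m) B1) (Amb m Zero :: Act (Open_ m) (ren p T') :: map (ren p) Zs))
      by (eapply Permutation_in; [apply Permutation_sym, Hperm | simpl; auto]).
    destruct Hin as [E | [E | Hin]]; [discriminate | injection E; auto |].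
    apply in_map_iff in Hin. destruct Hin as [e [Ee He]].
    exfalso. apply (HmZs e He). rewrite Ee. simpl. auto. }
  subst B1.
  assert (Hrr : Permutation (map (ren p) Zs) rr).
  { apply (Permutation_cons_inv (a := Amb m Zero)), (Permutation_cons_inv (a := Act (Open_ m) (ren p T'))).
    eapply Permutation_trans; [apply perm_swap | exact Hperm]. }
  etransitivity; [apply (scong_comps_equiv _ _ _ HsY HY)|].
  rewrite (nu_count_red _ _ Hr), Hk.
  rewrite (scong_comps T (s + k) HT), (scong_comps Z (s + k) HZ).
  fold T' Zs. rewrite (nus_ren_block _ _ _ _ Hpq (Par T' (par_list Zs))).
  cbn [ren]. rewrite ren_par_list, !par_list_app, <- Hl2, <- HB1, <- (par_list_perm _ _ Hrr).
  rewrite par_zero. reflexivity.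
Qed.

Lemma fn_Cprime n m T1 X x :
  In x (fn (Cprime n m T1 X)) <-> In x (fn X) \/ x = n \/ x = m \/ In x (fn T1).
Proof. simpl. rewrite in_app_iff. simpl. intuition. Qed.

Lemma comps_Cprime s n m T1 X : comps id s (Cprime n m T1 X) = comps id s X ++
  [Act (Open_ n) (par_list [Amb m Zero; Act (Open_ m) (par_list (comps id (s + nu_count X) T1))])].
Proof. simpl. rewrite !Nat.add_0_r. reflexivity. Qed.

Lemma open_n_step X n m T1 P'' s : ~ In m (fn X) ->
  (forall x, In x (fn (Cprime n m T1 X)) -> x < s) -> red (Cprime n m T1 X) P'' -> barb P'' m ->
  exists B l, Permutation (comps id s X) (Amb n B :: l) /\
    scong P'' (nus (seq s (nu_count X + nu_count T1))
      (Par (par_list [Amb m Zero; Act (Open_ m) (par_list (comps id (s + nu_count X) T1))])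
           (Par B (par_list l)))).
Proof.
  intros HmX Hs Hr Hb.
  assert (Hn : n < s) by (apply Hs, fn_Cprime; auto).
  assert (Hm : m < s) by (apply Hs, fn_Cprime; auto).
  assert (HsP : forall x, In x (fn P'') -> x < s) by (intros x Hx; apply Hs; eapply fn_red; eauto).
  destruct (red_comps_split _ _ s Hr Hs)
    as [p [q [lo' [lo [ln [rr [Hpq [Hperm [Hlo [Hstep [HP Hfn]]]]]]]]]]].
  replace (nu_count (Cprime n m T1 X)) with (nu_count X + nu_count T1) in Hpq by (simpl; lia).
  rewrite comps_Cprime, map_app in Hperm. cbn [map ren ren_cap] in Hperm.
  rewrite (bij_out _ _ _ _ Hpq n) in Hperm by lia.
  set (body := par_list [Amb m Zero; Act (Open_ m) (par_list (comps id (s + nu_count X) T1))]) in *.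
  set (Xs := comps id s X) in *.
  assert (HmXs : forall e, In e (map (ren p) Xs) -> ~ In m (fn e)).
  { intros e He. apply in_map_iff in He. destruct He as [e0 [<- He0]].
    apply (not_in_fn_ren _ _ _ _ _ _ Hpq Hm), (not_in_fn_comps s X); auto. }
  assert (Hopen : In (Act (Open_ n) (ren p body)) lo')
    by (eapply red_consumes_marked; eauto; discriminate).
  destruct (local_step_Act _ _ _ _ _ Hstep Hlo Hopen) as [c [B2 [l1 [l2 [Ec [-> [Hbody [HB2 ->]]]]]]]].
  injection Ec as <-.
  assert (HXs : Permutation (Amb n B2 :: rr) (map (ren p) Xs)).
  { rewrite <- (app_nil_r (map (ren p) Xs)).
    apply Permutation_cons_app_inv with (a := Act (Open_ n) (ren p body)).
    apply Permutation_sym, Hperm. }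
  apply Permutation_map_inv in HXs. destruct HXs as [[|z l] [El HXs]]; [discriminate|].
  injection El as Ez ->. destruct z as [| n0 B | | |]; try discriminate.
  injection Ez as En ->. symmetry in En. apply (block_bij_fixed _ _ _ _ Hpq) in En; auto. subst n0.
  exists B, l. split; [exact HXs|].
  etransitivity; [apply (scong_comps_equiv _ _ _ HsP HP)|].
  rewrite (nu_count_red _ _ Hr). replace (nu_count (Cprime n m T1 X)) with (nu_count X + nu_count T1) by (simpl; lia).
  rewrite (nus_ren_block _ _ _ _ Hpq (Par body (Par B (par_list l)))).
  cbn [ren]. rewrite ren_par_list, !par_list_app, <- Hbody, <- HB2, par_assoc. reflexivity.
Qed.

Lemma coopen_of_comps n T1 X Y s B l :
  (forall x, In x (fn X) -> x < s) -> (forall x, In x (fn T1) -> x < s) -> n < s ->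
  Permutation (comps id s X) (Amb n B :: l) ->
  scong Y (nus (seq s (nu_count X + nu_count T1))
             (Par (par_list (comps id (s + nu_count X) T1)) (Par B (par_list l)))) ->
  trans_coopen n T1 X Y.
Proof.
  intros HX HT Hn Hperm HY.
  assert (HZ : forall x, In x (fn (Par B (par_list l))) -> x < s + nu_count X).
  { intros x Hx. destruct (fn_comps_id s X x) as [H | H]; [| specialize (HX x H); lia | lia].
    apply (fn_scong _ _ (par_list_perm _ _ Hperm)). simpl in *. rewrite in_app_iff in *. tauto. }
  exists (seq s (nu_count X)), B, (par_list l). split; [|split; [|split]].
  - etransitivity; [apply (scong_normal_form X s HX)|]. rewrite (par_list_perm _ _ Hperm).
    reflexivity.
  - rewrite in_seq. lia.
  - intros a Ha HaT. apply in_seq in Ha. specialize (HT a HaT). lia.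
  - rewrite HY, seq_app, nus_app, nus_par_r.
    + rewrite <- scong_normal_form by (intros x Hx; specialize (HT x Hx); lia).
      rewrite <- par_assoc, (par_comm T1 B). reflexivity.
    + intros a Ha Ha'. apply in_seq in Ha. specialize (HZ a Ha'). lia.
Qed.

Lemma Popen_coopen n T1 X Y : Popen n T1 X Y -> trans_coopen n T1 X Y.
Proof.
  intros [P'' [m [HmX [Hb [Hr1 [Hr2 HbY]]]]]].
  set (s := S (list_max (fn (Cprime n m T1 X)))).
  assert (Hs : forall x, In x (fn (Cprime n m T1 X)) -> x < s) by apply lt_list_max.
  assert (HsX : forall x, In x (fn X) -> x < s) by (intros; apply Hs, fn_Cprime; auto).
  assert (HsT : forall x, In x (fn T1) -> x < s) by (intros; apply Hs, fn_Cprime; auto).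
  assert (Hn : n < s) by (apply Hs, fn_Cprime; auto).
  assert (Hm : m < s) by (apply Hs, fn_Cprime; auto).
  destruct (open_n_step _ _ _ _ _ _ HmX Hs Hr1 Hb) as [B [l [HX HP]]].
  apply (coopen_of_comps _ _ _ _ _ _ _ HsX HsT Hn HX).
  assert (Hcomps : forall P, In P (Amb n B :: l) -> In P (comps id s X))
    by (intros P HP'; eapply Permutation_in; [apply Permutation_sym, HX | auto]).
  apply (open_m_step m); auto.
  - apply nu_count_par_list. intros P HP'. eapply nu_count_comps; eauto.
  - simpl. rewrite nu_count_par_list, Nat.add_0_r.
    + apply (nu_count_comps X id s (Amb n B)), Hcomps. simpl. auto.
    + intros P HP'. apply (nu_count_comps X id s), Hcomps. simpl. auto.
  - simpl. rewrite in_app_iff, fn_par_list. intros [HmB | [P [HP' HmP]]].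
    + exact (not_in_fn_comps s X _ m HmX Hm (Hcomps _ (or_introl eq_refl)) (or_intror HmB)).
    + exact (not_in_fn_comps s X P m HmX Hm (Hcomps _ (or_intror HP')) HmP).
  - intros x Hx. apply Hs. eapply fn_red; [eauto|]. apply (fn_scong _ _ HP). auto.
  - eapply r_struct; [symmetry; exact HP | exact Hr2 | reflexivity].
Qed.

Lemma coopen_Popen_steps n T1 P P' A P1 P2 m :
  scong P (nus A (Par (Amb n P1) P2)) -> ~ In n A -> (forall a, In a A -> ~ In a (fn T1)) ->
  scong P' (nus A (Par (Par P1 T1) P2)) -> ~ In m A -> m <> n -> ~ In m (fn T1) ->
  ~ In m (fn P1) -> ~ In m (fn P2) ->
  exists P'', barb P'' m /\ red (Cprime n m T1 P) P'' /\ red P'' P' /\ ~ barb P' m.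
Proof.
  intros HP HnA HAT HP' HmA Hmn HmT HmP1 HmP2.
  set (Q := Par (Amb m Zero) (Act (Open_ m) T1)).
  exists (nus A (Par (Par Q P1) P2)). split; [|split; [|split]].
  - exists A, Zero, (Par (Act (Open_ m) T1) (Par P1 P2)). split; auto.
    apply nus_proper. unfold Q. rewrite !par_assoc. reflexivity.
  - apply r_struct with (nus A (Par (Par (Act (Open_ n) Q) (Amb n P1)) P2))
                        (nus A (Par (Par Q P1) P2)); [| apply red_nus, r_par, r_open | reflexivity].
    unfold Cprime. rewrite HP, <- nus_par_r.
    + apply nus_proper. rewrite (par_comm (Par (Amb n P1) P2)), <- par_assoc. reflexivity.
    + intros a Ha. simpl. intros [-> | [-> | [-> | HaT]]]; auto.
      apply (HAT a); auto.
  - apply r_struct with (nus A (Par (Par (Act (Open_ m) T1) (Amb m Zero)) (Par P1 P2)))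
                        (nus A (Par (Par T1 Zero) (Par P1 P2))); [| apply red_nus, r_par, r_open |].
    + apply nus_proper. unfold Q. rewrite par_assoc, (par_comm (Amb m Zero)). reflexivity.
    + rewrite HP'. apply nus_proper. rewrite par_zero, (par_comm P1 T1), par_assoc. reflexivity.
  - intros Hb. apply barb_fn, (fn_scong _ _ HP'), fn_nus in Hb. destruct Hb as [Hb _].
    simpl in Hb. rewrite !in_app_iff in Hb. tauto.
Qed.

(* Avoiding [L] is what stability needs: the witness must also be fresh for the partner process. *)
Lemma coopen_Popen_avoiding n T1 P P' L : trans_coopen n T1 P P' ->
  exists m, ~ In m L /\ ~ In m (fn P) /\
    exists P'', barb P'' m /\ red (Cprime n m T1 P) P'' /\ red P'' P' /\ ~ barb P' m.
Proof.
  intros [A [P1 [P2 [HP [HnA [HAT HP']]]]]].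
  destruct (fresh_name (L ++ fn P ++ A ++ fn T1 ++ fn P1 ++ fn P2 ++ [n])) as [m Hm].
  rewrite !in_app_iff in Hm. simpl in Hm.
  exists m. split; [tauto | split; [tauto|]].
  apply (coopen_Popen_steps n T1 P P' A P1 P2 m); auto; try tauto.
  intros ->. tauto.
Qed.

Lemma coopen_Popen n T1 P P' : trans_coopen n T1 P P' -> Popen n T1 P P'.
Proof.
  intros H. destruct (coopen_Popen_avoiding _ _ _ _ [] H) as [m [_ [HmP [P'' HP'']]]].
  exists P'', m. tauto.
Qed.

Lemma Popen_stable n T1 : stable (Popen n T1) bisimBS.
Proof.
  intros P Q P' [R [Rsym [Rprog HR]]] HPP'.
  destruct (coopen_Popen_avoiding _ _ _ _ (fn Q) (Popen_coopen _ _ _ _ HPP'))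
    as [m [HmQ [_ [P'' [Hb [Hr1 [Hr2 HbP']]]]]]].
  destruct (proj2 (Rprog P Q HR (CParL Hole (Act (Open_ n) (Par (Amb m Zero) (Act (Open_ m) T1))))) P'' Hr1)
    as [Q'' [HrQ HRQ]].
  destruct (proj2 (Rprog P'' Q'' HRQ Hole) P' Hr2) as [Q' [HrQ' HRQ']].
  exists Q'. split.
  - exists Q'', m. repeat split; auto.
    + apply (proj1 (Rprog P'' Q'' HRQ Hole)). exact Hb.
    + intros HbQ. apply HbP', (proj1 (Rprog Q' P' (Rsym _ _ HRQ') Hole)). exact HbQ.
  - exists R. auto.
Qed.

Theorem mainTheorem4 (n : name) (T1 : proc) :
  stable (Popen n T1) bisimBS /\
  (forall P P' : proc, Popen n T1 P P' <-> trans_coopen n T1 P P').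
Proof.
  split; [apply Popen_stable|].
  intros P P'. split; [apply Popen_coopen | apply coopen_Popen].
Qed.
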